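(* Let $L>0$ and let $f:\mathbb{R}\times\mathbb{R}\to\mathbb{R}$ be continuous, $L$-periodic in the first argument, and continuously differentiable in the second argument. Let $\alpha,\beta:[x_0,+\infty)\to\mathbb{R}$ be bounded twice differentiable functions such that (1) $\alpha(x)<\beta(x)$ for all $x>x_0$; (2) $\alpha_{xx}(x)>f(x,\alpha(x))$ and $\beta_{xx}(x)<f(x,\beta(x))$ for all $x>x_0$. Then there exists a solution $\phi$ of $\phi_{xx}=f(x,\phi)$ on $[x_0,+\infty)$ with $\alpha(x)<\phi(x)<\beta(x)$. If moreover (3) $\displaystyle\min_{x\in[0,L],\ y\in[\inf_{x\ge x_0}\alpha(x),\,\sup_{x\ge x_0}\beta(x)]}\frac{\partial f(x,y)}{\partial y}>0$, then there exists an $L$-periodic solution $\varphi$ of $\varphi_{xx}=f(x,\varphi)$ such that $$\lim_{x\to+\infty}\big(|\phi(x)-\varphi(x)|+|\phi_x(x)-\varphi_x(x)|\big)=0,$$ and $\varphi$ is the unique $L$-periodic solution of this equation with values in the interval $[\inf_{x\ge x_0}\alpha(x),\,\sup_{x\ge x_0}\beta(x)]$. *)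

From Stdlib Require Import Reals.
From Coquelicot Require Import Coquelicot.
Open Scope R_scope.

Definition periodic (L : R) (g : R -> R) : Prop := forall x, g (x + L) = g x.

(* infimum / supremum of g over [x0, +oo) (finite when g is bounded there) *)
Definition inf_from (x0 : R) (g : R -> R) : R :=
  real (Glb_Rbar (fun y => exists x, x0 <= x /\ y = g x)).
Definition sup_from (x0 : R) (g : R -> R) : R :=
  real (Lub_Rbar (fun y => exists x, x0 <= x /\ y = g x)).

Definition bounded_from (x0 : R) (g : R -> R) : Prop :=
  exists M, forall x, x0 <= x -> Rabs (g x) <= M.

Definition twice_diff_from (x0 : R) (g g1 g2 : R -> R) : Prop :=
  forall x, x0 <= x -> is_derive g x (g1 x) /\ is_derive g1 x (g2 x).

Definition solution_from (f : R -> R -> R) (x0 : R) (g g1 : R -> R) : Prop :=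
  forall x, x0 <= x -> is_derive g x (g1 x) /\ is_derive g1 x (f x (g x)).

Definition solution (f : R -> R -> R) (g g1 : R -> R) : Prop :=
  forall x, is_derive g x (g1 x) /\ is_derive g1 x (f x (g x)).

From Stdlib Require Import Reals.
From Coquelicot Require Import Coquelicot.
From Stdlib Require Import Lra Lia ClassicalEpsilon Classical_Prop.
Open Scope R_scope.

(* Clamping f between the barriers alpha and beta gives a bounded, globally Lipschitz
   equation, whose solutions with phi(x0) = alpha(x0) exist for every initial slope s (Picard
   iteration) and depend continuously on s.  The slopes whose solution eventually drops below
   alpha, and those whose solution eventually rises above beta, form two disjoint open sets:
   since alpha'' > f(x, alpha) and beta'' < f(x, beta), a solution that has left the strip
   never comes back.  Both sets are nonempty, so by connectedness some slope lies in neither;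
   its solution stays between the barriers, hence solves the original equation, and the
   second-derivative test at a contact point makes the inequalities strict.

   If moreover f_y >= m > 0 on the strip [a, b], the difference w of two solutions with
   values in [a, b] satisfies (w^2)'' >= 2 m w^2, and comparison with the barrier
   (b - a)^2 (e^{-k (x - A)} + e^{-k (T - x)}) yields |w(x)| <= (b - a) e^{-k (x - A) / 2}.
   By periodicity the translates phi(. + n L) are solutions too, so they converge, with their
   derivatives, to an L-periodic solution psi attracting phi; the same estimate on ever
   longer half-lines forces every entire solution with values in [a, b] to be psi. *)

Lemma is_derive_continuous (u : R -> R) t l : is_derive u t l -> continuous u t.
Proof. intros H. apply (ex_derive_continuous (V := R_NormedModule) u). exists l. exact H. Qed.

Lemma continuous_fun2_comp (F : R -> R -> R) (Y : R -> R) t :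
  (forall p : R * R, continuous (fun q : R * R => F (fst q) (snd q)) p) ->
  continuous Y t -> continuous (fun tau => F tau (Y tau)) t.
Proof.
  intros HFc HY. apply (continuous_comp_2 (fun tau => tau) Y F t); [apply continuous_id| exact HY| apply HFc].
Qed.

Lemma continuous_Rmax {U : UniformSpace} (u v : U -> R) x :
  continuous u x -> continuous v x -> continuous (fun y => Rmax (u y) (v y)) x.
Proof.
  intros Hu Hv.
  apply (continuous_ext (fun y => (u y + v y + Rabs (u y - v y)) * / 2)).
  { intros y. unfold Rmax. destruct (Rle_dec (u y) (v y)); unfold Rabs; destruct (Rcase_abs (u y - v y)); lra. }
  apply (continuous_mult (K := R_AbsRing) _ (fun _ => / 2)); [|apply continuous_const].
  apply (continuous_plus (V := R_NormedModule)); [apply (continuous_plus (V := R_NormedModule)); auto|].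
  apply (continuous_comp _ Rabs); [apply (continuous_minus (V := R_NormedModule)); auto| apply continuous_Rabs].
Qed.

Lemma continuous_Rmin {U : UniformSpace} (u v : U -> R) x :
  continuous u x -> continuous v x -> continuous (fun y => Rmin (u y) (v y)) x.
Proof.
  intros Hu Hv.
  apply (continuous_ext (fun y => - Rmax (- u y) (- v y))).
  { intros y. rewrite Rmax_opp_Rmin. apply Ropp_involutive. }
  apply (continuous_opp (V := R_NormedModule)), continuous_Rmax;
    apply (continuous_opp (V := R_NormedModule)); auto.
Qed.

Lemma is_derive_MVT (u u1 : R -> R) (a b : R) :
  a < b -> (forall t, a <= t <= b -> is_derive u t (u1 t)) ->
  exists c, a < c < b /\ u b - u a = u1 c * (b - a).
Proof.
  intros Hab Hd. destruct (MVT_cor2 u u1 a b Hab) as [c [Heq Hc]].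
  - intros c Hc. apply is_derive_Reals, Hd, Hc.
  - exists c. auto.
Qed.

Lemma local_min_derive_eq0 (u : R -> R) c l d :
  0 < d -> is_derive u c l -> (forall t, Rabs (t - c) < d -> u c <= u t) -> l = 0.
Proof.
  intros Hd Hl Hmin. apply is_derive_Reals in Hl.
  assert (pr : derivable_pt u c) by (exists l; exact Hl).
  rewrite <- (derive_pt_eq_0 u c l pr Hl).
  apply (deriv_minimum u (c - d) (c + d)); try lra.
  intros t Ht1 Ht2. apply Hmin, Rabs_def1; lra.
Qed.

Lemma local_min_second_derive_ge0 (u u1 : R -> R) c d u2c :
  0 < d -> (forall t, Rabs (t - c) < d -> is_derive u t (u1 t)) ->
  is_derive u1 c u2c -> (forall t, Rabs (t - c) < d -> u c <= u t) -> 0 <= u2c.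
Proof.
  intros Hd Hder Hd2 Hmin.
  assert (Hu1 : u1 c = 0).
  { apply (local_min_derive_eq0 u c _ d Hd); auto.
    apply Hder. rewrite Rminus_eq_0, Rabs_R0. exact Hd. }
  destruct (Rle_or_lt 0 u2c) as [|Hneg]; auto. exfalso.
  apply is_derive_Reals in Hd2. destruct (Hd2 (- u2c / 2)) as [eta Heta]; [lra|].
  pose proof (cond_pos eta).
  set (h := Rmin eta d / 2).
  assert (0 < h /\ h < eta /\ h < d) as (Hh0 & Hheta & Hhd).
  { pose proof (Rmin_l eta d). pose proof (Rmin_r eta d).
    pose proof (Rmin_pos eta d ltac:(lra) Hd). unfold h. lra. }
  destruct (is_derive_MVT u u1 c (c + h)) as [xi [Hxi Heq]]; [lra| |].
  { intros t Ht. apply Hder, Rabs_def1; lra. }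
  (* u1 is negative just to the right of its zero c, so u decreases there *)
  assert (Hneg1 : u1 xi < 0).
  { specialize (Heta (xi - c) ltac:(lra) ltac:(rewrite Rabs_right; lra)).
    replace (c + (xi - c)) with xi in Heta by ring. rewrite Hu1, Rminus_0_r in Heta.
    apply Rabs_def2 in Heta. destruct Heta as [Heta _].
    replace (u1 xi) with (u1 xi / (xi - c) * (xi - c)) by (field; lra). nra. }
  assert (u c <= u (c + h)) by (apply Hmin, Rabs_def1; lra).
  nra.
Qed.

Lemma local_max_second_derive_le0 (u u1 : R -> R) c d u2c :
  0 < d -> (forall t, Rabs (t - c) < d -> is_derive u t (u1 t)) ->
  is_derive u1 c u2c -> (forall t, Rabs (t - c) < d -> u t <= u c) -> u2c <= 0.
Proof.
  intros Hd Hder Hd2 Hmax.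
  enough (0 <= - u2c) by lra.
  apply (local_min_second_derive_ge0 (fun t => - u t) (fun t => - u1 t) c d); auto.
  - intros t Ht. apply (is_derive_opp u), Hder, Ht.
  - apply (is_derive_opp u1), Hd2.
  - intros t Ht. specialize (Hmax t Ht). lra.
Qed.

Lemma max_principle (h h1 h2 : R -> R) A T :
  (forall t, A <= t <= T -> is_derive h t (h1 t) /\ is_derive h1 t (h2 t)) ->
  h A <= 0 -> h T <= 0 -> (forall t, A < t < T -> 0 < h t -> 0 < h2 t) ->
  forall t, A <= t <= T -> h t <= 0.
Proof.
  intros Hd HA HT Hconv t Ht.
  destruct (continuity_ab_maj h A T) as [tm [Hmax Htm]]; [lra| |].
  { intros c Hc. apply continuity_pt_filterlim.
    apply (is_derive_continuous h c (h1 c)), Hd, Hc. }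
  destruct (Rle_or_lt (h tm) 0) as [Hle|Hpos]; [eapply Rle_trans; [apply Hmax, Ht| exact Hle]|].
  exfalso.
  assert (Hin : A < tm < T).
  { split; apply Rnot_le_lt; intro; [replace tm with A in Hpos by lra| replace tm with T in Hpos by lra]; lra. }
  set (d := Rmin (tm - A) (T - tm)).
  assert (0 < d /\ d <= tm - A /\ d <= T - tm) as (Hd0 & HdA & HdT).
  { unfold d. split; [apply Rmin_pos; lra| split; [apply Rmin_l| apply Rmin_r]]. }
  assert (h2 tm <= 0).
  { apply (local_max_second_derive_le0 h h1 tm d); auto.
    - intros s Hs. apply Rabs_def2 in Hs. apply Hd. lra.
    - apply Hd. lra.
    - intros s Hs. apply Rabs_def2 in Hs. apply Hmax. lra. }
  specialize (Hconv tm Hin Hpos). lra.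
Qed.

Lemma negative_persists (u u1 u2 : R -> R) x0 :
  (forall t, x0 <= t -> is_derive u t (u1 t) /\ is_derive u1 t (u2 t)) ->
  0 <= u x0 -> (forall t, x0 < t -> u t < 0 -> u2 t < 0) ->
  forall t1 t2, x0 < t1 <= t2 -> u t1 < 0 -> u t2 < 0.
Proof.
  intros Hd H0 Hconc t1 t2 Ht Hu1.
  apply Rnot_le_lt. intros Hu2.
  enough (- u t1 <= 0) by lra.
  apply (max_principle (fun t => - u t) (fun t => - u1 t) (fun t => - u2 t) x0 t2); try lra.
  - intros t Ht'. split; [apply (is_derive_opp u)| apply (is_derive_opp u1)]; apply Hd; lra.
  - intros t Ht' Hneg. specialize (Hconc t (proj1 Ht') ltac:(lra)). lra.
Qed.

Lemma exp_le_mono a b : a <= b -> exp a <= exp b.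
Proof. intros [H| ->]; [left; apply exp_increasing, H| lra]. Qed.

Lemma exp_mult_INR x n : exp (x * INR n) = exp x ^ n.
Proof.
  induction n as [|n IH].
  - simpl. rewrite Rmult_0_r. apply exp_0.
  - rewrite S_INR, Rmult_plus_distr_l, Rmult_1_r, exp_plus, IH. simpl. ring.
Qed.

Lemma is_lim_seq_exp_neg c : 0 < c -> is_lim_seq (fun n => exp (- c * INR n)) 0.
Proof.
  intros Hc. apply (is_lim_seq_ext (fun n => exp (- c) ^ n)).
  { intros n. symmetry. apply exp_mult_INR. }
  apply is_lim_seq_geom. rewrite Rabs_right by (left; apply exp_pos).
  rewrite <- exp_0. apply exp_increasing. lra.
Qed.

Lemma le_of_le_plus_null_seq (x c : R) (r : nat -> R) :
  is_lim_seq r 0 -> (forall n, x <= c + r n) -> x <= c.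
Proof.
  intros Hr H.
  assert (Hc : is_lim_seq (fun n => c + r n) c).
  { replace (Finite c) with (Rbar_plus c 0) by (simpl; f_equal; ring).
    apply is_lim_seq_plus'; [apply is_lim_seq_const| exact Hr]. }
  exact (is_lim_seq_le (fun _ => x) _ x c H (is_lim_seq_const x) Hc).
Qed.

Lemma eq0_of_abs_le_null_seq (x : R) (r : nat -> R) :
  is_lim_seq r 0 -> (forall n, Rabs x <= r n) -> x = 0.
Proof.
  intros Hr H. apply Rabs_eq_0, Rle_antisym; [|apply Rabs_pos].
  apply (le_of_le_plus_null_seq _ 0 r Hr). intros n. rewrite Rplus_0_l. apply H.
Qed.

Lemma is_lim_seq_of_rate (u r : nat -> R) l :
  is_lim_seq r 0 -> (forall n, Rabs (u n - l) <= r n) -> is_lim_seq u l.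
Proof.
  intros Hr Hu. apply is_lim_seq_spec. intros eps.
  apply is_lim_seq_spec in Hr. destruct (Hr eps) as [N HN]. exists N. intros n Hn.
  specialize (HN n Hn). rewrite Rminus_0_r in HN.
  eapply Rle_lt_trans; [apply Hu|]. eapply Rle_lt_trans; [apply Rle_abs| exact HN].
Qed.

Lemma Cauchy_rate_Lim_seq (u r : nat -> R) :
  is_lim_seq r 0 -> (forall n j, Rabs (u (n + j)%nat - u n) <= r n) ->
  forall n, Rabs (u n - Lim_seq u) <= r n.
Proof.
  intros Hr Hc.
  assert (Hex : ex_finite_lim_seq u).
  { apply ex_lim_seq_cauchy_corr. intro eps.
    apply is_lim_seq_spec in Hr. destruct (Hr (pos_div_2 eps)) as [N HN].
    exists N. intros n m Hn Hm.
    specialize (HN N (le_n N)). simpl in HN. rewrite Rminus_0_r in HN. apply Rabs_def2 in HN.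
    pose proof (Hc N (n - N)%nat) as A. pose proof (Hc N (m - N)%nat) as B.
    replace (N + (n - N))%nat with n in A by lia. replace (N + (m - N))%nat with m in B by lia.
    replace (u n - u m) with ((u n - u N) - (u m - u N)) by ring.
    eapply Rle_lt_trans; [apply Rabs_triang|]. rewrite Rabs_Ropp. lra. }
  destruct Hex as [l Hl]. rewrite (is_lim_seq_unique u l Hl). simpl. intros n.
  assert (Htail : is_lim_seq (fun j => Rabs (u (j + n)%nat - u n)) (Rabs (l - u n))).
  { apply (is_lim_seq_abs _ (l - u n)), is_lim_seq_minus'; [|apply is_lim_seq_const].
    apply (is_lim_seq_incr_n u n l), Hl. }
  rewrite <- Rabs_Ropp. replace (- (u n - l)) with (l - u n) by ring.
  refine (is_lim_seq_le _ (fun _ => r n) _ (r n) _ Htail (is_lim_seq_const _)).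
  intros j. rewrite Nat.add_comm. apply Hc.
Qed.

Lemma geometric_Cauchy (u : nat -> R) D :
  (forall n, Rabs (u (S n) - u n) <= D * (1/2)^n) ->
  forall n j, Rabs (u (n + j)%nat - u n) <= 2 * D * (1/2)^n.
Proof.
  intros H n j.
  assert (HD : 0 <= D) by (specialize (H 0%nat); pose proof (Rabs_pos (u 1%nat - u 0%nat)); simpl in H; lra).
  assert (Hn : 0 <= D * (1/2)^n) by (apply Rmult_le_pos; [lra| apply pow_le; lra]).
  enough (Rabs (u (n + j)%nat - u n) <= 2 * D * (1/2)^n * (1 - (1/2)^j)).
  { pose proof (pow_le (1/2) j ltac:(lra)). nra. }
  induction j as [|j IH].
  - rewrite Nat.add_0_r, Rminus_eq_0, Rabs_R0. simpl. lra.
  - replace (n + S j)%nat with (S (n + j)) by lia.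
    specialize (H (n + j)%nat). rewrite pow_add in H.
    replace (u (S (n + j)) - u n) with ((u (S (n + j)) - u (n + j)%nat) + (u (n + j)%nat - u n)) by ring.
    eapply Rle_trans; [apply Rabs_triang|]. simpl. nra.
Qed.

Lemma geometric_rate_Lim_seq (u : nat -> R) D :
  (forall n, Rabs (u (S n) - u n) <= D * (1/2)^n) ->
  forall n, Rabs (u n - Lim_seq u) <= 2 * D * (1/2)^n.
Proof.
  intros H. apply (Cauchy_rate_Lim_seq u (fun n => 2 * D * (1/2)^n)).
  - replace (Finite 0) with (Rbar_mult (2 * D) 0) by (simpl; f_equal; ring).
    apply is_lim_seq_scal_l, is_lim_seq_geom. rewrite Rabs_right; lra.
  - apply geometric_Cauchy, H.
Qed.

Lemma CVU_dom_of_rate (u : nat -> R -> R) (D : R -> Prop) (r : nat -> R) :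
  is_lim_seq r 0 -> (forall n y, D y -> Rabs (u n y - Lim_seq (fun k => u k y)) <= r n) ->
  CVU_dom u D.
Proof.
  intros Hr Hu eps. apply is_lim_seq_spec in Hr. destruct (Hr eps) as [N HN].
  exists N. intros n Hn y Hy. specialize (HN n Hn). rewrite Rminus_0_r in HN.
  eapply Rle_lt_trans; [apply Hu, Hy|]. eapply Rle_lt_trans; [apply Rle_abs| exact HN].
Qed.

Lemma continuous_Lim_seq_of_rate (u : nat -> R -> R) (r : nat -> R) x :
  is_lim_seq r 0 -> (forall n y, x - 1 < y < x + 1 -> continuous (u n) y) ->
  (forall n y, x - 1 < y < x + 1 -> Rabs (u n y - Lim_seq (fun k => u k y)) <= r n) ->
  continuous (fun y => real (Lim_seq (fun n => u n y))) x.
Proof.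
  intros Hr Hc Hu. apply continuity_pt_filterlim.
  apply (CVU_cont_open u (fun y => x - 1 < y < x + 1)).
  - apply open_and; [apply open_gt| apply open_lt].
  - apply (CVU_dom_of_rate u _ r Hr Hu).
  - intros n y Hy. apply continuity_pt_filterlim, Hc, Hy.
  - lra.
Qed.

Lemma is_derive_Lim_seq_of_rate (u u1 : nat -> R -> R) (r : nat -> R) x :
  is_lim_seq r 0 ->
  (forall n y, x - 1 < y < x + 1 -> is_derive (u n) y (u1 n y)) ->
  (forall n y, x - 1 < y < x + 1 -> continuous (u1 n) y) ->
  (forall n y, x - 1 < y < x + 1 -> Rabs (u n y - Lim_seq (fun k => u k y)) <= r n) ->
  (forall n y, x - 1 < y < x + 1 -> Rabs (u1 n y - Lim_seq (fun k => u1 k y)) <= r n) ->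
  is_derive (fun y => real (Lim_seq (fun n => u n y))) x (real (Lim_seq (fun n => u1 n x))).
Proof.
  intros Hr Hd Hc Hu Hu1.
  set (D := fun y => x - 1 < y < x + 1).
  assert (HDer : forall n y, D y -> Derive (u n) y = u1 n y)
    by (intros n y Hy; apply is_derive_unique, Hd, Hy).
  rewrite <- (Lim_seq_ext (fun n => Derive (u n) x)) by (intros n; apply HDer; unfold D; lra).
  apply (CVU_Derive u D).
  - apply open_and; [apply open_gt| apply open_lt].
  - intros p q z Hp Hq Hz. unfold D in *. lra.
  - apply (CVU_dom_of_rate u D r Hr Hu).
  - intros n y Hy. exists (u1 n y). apply Hd, Hy.
  - intros n y Hy. apply (continuity_pt_ext_loc (u1 n)).
    + assert (Hpos : 0 < Rmin (y - (x - 1)) (x + 1 - y)) by (destruct Hy; apply Rmin_pos; lra).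
      exists (mkposreal _ Hpos). intros z Hz. symmetry. apply HDer.
      change (Rabs (z - y) < Rmin (y - (x - 1)) (x + 1 - y)) in Hz.
      pose proof (Rmin_l (y - (x - 1)) (x + 1 - y)). pose proof (Rmin_r (y - (x - 1)) (x + 1 - y)).
      apply Rabs_def2 in Hz. unfold D in *. lra.
    + apply continuity_pt_filterlim, Hc, Hy.
  - apply (CVU_dom_of_rate _ D r Hr). intros n y Hy. rewrite HDer by exact Hy.
    rewrite (Lim_seq_ext _ (fun k => u1 k y)) by (intros; apply HDer, Hy). apply Hu1, Hy.
  - unfold D. lra.
Qed.

Lemma ex_RInt_continuous_R (g : R -> R) a b : (forall t, continuous g t) -> ex_RInt g a b.
Proof. intros H. apply (ex_RInt_continuous (V := R_CompleteNormedModule)). intros; apply H. Qed.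

Lemma is_derive_RInt_continuous (g : R -> R) x0 t :
  (forall tau, continuous g tau) -> is_derive (fun t => RInt g x0 t) t (g t).
Proof.
  intros H. apply (is_derive_RInt g _ x0 t); [|apply H].
  exists (mkposreal 1 Rlt_0_1). intros y _.
  apply (RInt_correct (V := R_CompleteNormedModule)), ex_RInt_continuous_R, H.
Qed.

Lemma RInt_minus_R (g h : R -> R) a b :
  (forall t, continuous g t) -> (forall t, continuous h t) ->
  RInt (fun t => g t - h t) a b = RInt g a b - RInt h a b.
Proof.
  intros Hg Hh. exact (RInt_minus (V := R_CompleteNormedModule) g h a b
    (ex_RInt_continuous_R g a b Hg) (ex_RInt_continuous_R h a b Hh)).
Qed.

Lemma abs_RInt_swap (g : R -> R) a b :
  (forall t, continuous g t) -> Rabs (RInt g b a) = Rabs (RInt g a b).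
Proof.
  intros Hg. rewrite <- (opp_RInt_swap (V := R_CompleteNormedModule) g a b) by (apply ex_RInt_continuous_R, Hg).
  apply Rabs_Ropp.
Qed.

Lemma abs_RInt_le_const_between (g : R -> R) x0 t B :
  (forall tau, continuous g tau) ->
  (forall tau, Rmin x0 t <= tau <= Rmax x0 t -> Rabs (g tau) <= B) ->
  Rabs (RInt g x0 t) <= Rabs (t - x0) * B.
Proof.
  intros Hc Hb. destruct (Rle_or_lt x0 t) as [Hle|Hlt].
  - rewrite (Rabs_right (t - x0)) by lra. apply abs_RInt_le_const; auto; [apply ex_RInt_continuous_R, Hc|].
    intros tau Ht. apply Hb. rewrite Rmin_left, Rmax_right; lra.
  - rewrite <- abs_RInt_swap, (Rabs_left (t - x0)) by (auto; lra). replace (- (t - x0)) with (x0 - t) by ring.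
    apply abs_RInt_le_const; [lra| apply ex_RInt_continuous_R, Hc|].
    intros tau Ht. apply Hb. rewrite Rmin_right, Rmax_left; lra.
Qed.

Lemma abs_RInt_le_primitive (g H h : R -> R) a b :
  a <= b -> (forall t, continuous g t) ->
  (forall t, a <= t <= b -> is_derive H t (h t)) -> (forall t, continuous h t) ->
  (forall t, a <= t <= b -> Rabs (g t) <= h t) ->
  Rabs (RInt g a b) <= H b - H a.
Proof.
  intros Hab Hg HH Hh Hgh.
  assert (Hint : is_RInt h a b (minus (H b) (H a))).
  { apply (is_RInt_derive (V := R_CompleteNormedModule)).
    - intros t Ht. rewrite Rmin_left, Rmax_right in Ht by lra. apply HH, Ht.
    - intros t _. apply Hh. }
  eapply Rle_trans; [apply abs_RInt_le; [exact Hab| apply ex_RInt_continuous_R, Hg]|].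
  change (H b - H a) with (minus (H b) (H a)).
  rewrite <- (is_RInt_unique _ _ _ _ Hint). apply RInt_le; auto.
  - apply ex_RInt_continuous_R. intros t. apply (continuous_comp g Rabs); [apply Hg| apply continuous_Rabs].
  - exists (minus (H b) (H a)). exact Hint.
  - intros t Ht. apply Hgh. lra.
Qed.

Lemma abs_RInt_le_exp_between (g : R -> R) x0 t B k :
  0 < k -> (forall tau, continuous g tau) ->
  (forall tau, Rmin x0 t <= tau <= Rmax x0 t -> Rabs (g tau) <= B * exp (k * Rabs (tau - x0))) ->
  Rabs (RInt g x0 t) <= B * exp (k * Rabs (t - x0)) / k.
Proof.
  intros Hk Hc Hb.
  assert (HB : 0 <= B).
  { specialize (Hb x0 (conj (Rmin_l _ _) (Rmax_l _ _))).
    rewrite Rminus_eq_0, Rabs_R0, Rmult_0_r, exp_0, Rmult_1_r in Hb.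
    pose proof (Rabs_pos (g x0)). lra. }
  assert (HBk : 0 <= B / k) by (apply Rdiv_le_0_compat; lra).
  destruct (Rle_or_lt x0 t) as [Hle|Hlt].
  - eapply Rle_trans.
    + apply (abs_RInt_le_primitive g (fun tau => B * exp (k * (tau - x0)) / k)
               (fun tau => B * exp (k * (tau - x0)))); auto.
      * intros tau _. auto_derive; auto. unfold Rminus. field. lra.
      * intros tau. apply (is_derive_continuous _ _ (B * (k * exp (k * (tau - x0))))).
        auto_derive; auto. unfold Rminus. ring.
      * intros tau Ht. rewrite <- (Rabs_right (tau - x0)) by lra. apply Hb.
        rewrite Rmin_left, Rmax_right; lra.
    + rewrite (Rabs_right (t - x0)), Rminus_eq_0, Rmult_0_r, exp_0 by lra. lra.
  - rewrite <- abs_RInt_swap by exact Hc. eapply Rle_trans.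
    + apply (abs_RInt_le_primitive g (fun tau => - (B * exp (k * (x0 - tau)) / k))
               (fun tau => B * exp (k * (x0 - tau)))); auto; [lra| | |].
      * intros tau _. auto_derive; auto. unfold Rminus. field. lra.
      * intros tau. apply (is_derive_continuous _ _ (B * (- k * exp (k * (x0 - tau))))).
        auto_derive; auto. unfold Rminus. ring.
      * intros tau Ht. replace (x0 - tau) with (- (tau - x0)) by ring.
        rewrite <- (Rabs_left1 (tau - x0)) by lra. apply Hb.
        rewrite Rmin_right, Rmax_left; lra.
    + rewrite (Rabs_left (t - x0)), Rminus_eq_0, Rmult_0_r, exp_0 by lra.
      replace (- (t - x0)) with (x0 - t) by ring. lra.
Qed.

Lemma integral_equation_limit (u v : nat -> R -> R) (U V : R -> R) c x0 t E :
  (forall n tau, continuous (v n) tau) -> (forall tau, continuous V tau) ->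
  (forall n, u (S n) t = c + RInt (v n) x0 t) ->
  (forall n, Rabs (u n t - U t) <= E * (1/2)^n) ->
  (forall n tau, Rmin x0 t <= tau <= Rmax x0 t -> Rabs (v n tau - V tau) <= E * (1/2)^n) ->
  U t = c + RInt V x0 t.
Proof.
  intros Hv HV Hu HuU HvV.
  apply Rminus_diag_uniq.
  apply (eq0_of_abs_le_null_seq _ (fun n => E * (1 + Rabs (t - x0)) * (1/2)^n)).
  { replace (Finite 0) with (Rbar_mult (E * (1 + Rabs (t - x0))) 0) by (simpl; f_equal; ring).
    apply is_lim_seq_scal_l, is_lim_seq_geom. rewrite Rabs_right; lra. }
  intros n.
  replace (U t - (c + RInt V x0 t)) with (- (u (S n) t - U t) + RInt (fun tau => v n tau - V tau) x0 t)
    by (rewrite Hu, RInt_minus_R by auto; ring).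
  eapply Rle_trans; [apply Rabs_triang|]. rewrite Rabs_Ropp.
  assert (HE : 0 <= E)
    by (specialize (HuU 0%nat); pose proof (Rabs_pos (u 0%nat t - U t)); simpl in HuU; lra).
  assert (A1 : Rabs (u (S n) t - U t) <= E * (1/2)^n).
  { eapply Rle_trans; [apply HuU|]. simpl. pose proof (pow_le (1/2) n). nra. }
  assert (A2 : Rabs (RInt (fun tau => v n tau - V tau) x0 t) <= Rabs (t - x0) * (E * (1/2)^n)).
  { apply abs_RInt_le_const_between; [|apply HvV].
    intros tau. apply (continuous_minus (V := R_NormedModule)); auto. }
  lra.
Qed.

Lemma periodic_nat (f : R -> R -> R) L : (forall x y, f (x + L) y = f x y) ->
  forall n x y, f (x + INR n * L) y = f x y.
Proof.
  intros Hp. induction n as [|n IH]; intros x y.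
  - simpl. rewrite Rmult_0_l, Rplus_0_r. reflexivity.
  - rewrite S_INR. replace (x + (INR n + 1) * L) with ((x + INR n * L) + L) by ring.
    rewrite Hp. apply IH.
Qed.

Lemma continuous_2d_unif_on_rect (g : R -> R -> R) a b a' b' eps :
  (forall p : R * R, continuous (fun q : R * R => g (fst q) (snd q)) p) -> 0 < eps ->
  exists d, 0 < d /\ forall x y x' y', a <= x <= b -> a' <= y <= b' ->
    Rabs (x - x') < d -> Rabs (y - y') < d -> Rabs (g x y - g x' y') < eps.
Proof.
  intros Hc Heps.
  assert (Hloc : forall u v, exists e : posreal, forall x y, Rabs (x - u) < e -> Rabs (y - v) < e ->
            Rabs (g x y - g u v) < eps / 2).
  { intros u v. destruct (proj2 (continuity_2d_pt_filterlim g u v) (Hc (u, v)) (mkposreal (eps / 2) ltac:(lra)))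
      as [e He].
    exists e. intros x y Hx Hy. apply He; auto. }
  set (del u v := proj1_sig (constructive_indefinite_description _ (Hloc u v))).
  assert (Hdel : forall u v x y, Rabs (x - u) < del u v -> Rabs (y - v) < del u v -> Rabs (g x y - g u v) < eps / 2).
  { intros u v. unfold del. destruct (constructive_indefinite_description _ (Hloc u v)) as [e He]. exact He. }
  set (del2 u v := mkposreal (del u v / 2) ltac:(apply Rdiv_lt_0_compat; [apply cond_pos| lra])).
  destruct (compactness_value_2d a b a' b' del2) as [d Hd].
  exists d. split; [apply cond_pos|]. intros x y x' y' Hx Hy Hxx Hyy.
  apply NNPP. intro Hn. apply (Hd x y Hx Hy).
  intros [u [v [_ [_ [Hu [Hv Hdu]]]]]]. apply Hn. simpl in *. pose proof (cond_pos (del u v)).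
  assert (A1 : Rabs (g x y - g u v) < eps / 2) by (apply Hdel; lra).
  assert (A2 : Rabs (g x' y' - g u v) < eps / 2).
  { apply Hdel.
    - replace (x' - u) with ((x - u) - (x - x')) by ring.
      eapply Rle_lt_trans; [apply Rabs_triang|]. rewrite Rabs_Ropp. lra.
    - replace (y' - v) with ((y - v) - (y - y')) by ring.
      eapply Rle_lt_trans; [apply Rabs_triang|]. rewrite Rabs_Ropp. lra. }
  apply Rabs_def2 in A1. apply Rabs_def2 in A2. apply Rabs_def1; lra.
Qed.

Lemma abs_le_of_bounded_steps (u : R -> R) a b d C n :
  0 < d -> b - a <= INR n * d ->
  (forall s s', a <= s <= b -> a <= s' <= b -> Rabs (s - s') <= d -> Rabs (u s - u s') <= C) ->
  forall s, a <= s <= b -> Rabs (u s) <= Rabs (u a) + INR n * C.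
Proof.
  intros Hd Hn Hstep.
  assert (HC : forall s, a <= s <= b -> 0 <= C).
  { intros s Hs. specialize (Hstep s s Hs Hs). rewrite !Rminus_eq_0, Rabs_R0 in Hstep. apply Hstep. lra. }
  enough (H : forall n s, a <= s <= b -> s <= a + INR n * d -> Rabs (u s) <= Rabs (u a) + INR n * C).
  { intros s Hs. apply H; [exact Hs| lra]. }
  clear n Hn. induction n as [|n IH]; intros s Hs Hsn.
  - simpl in *. replace s with a by lra. lra.
  - rewrite S_INR in *. set (s' := Rmax a (s - d)).
    assert (0 <= INR n * d) by (apply Rmult_le_pos; [apply pos_INR| lra]).
    assert (Hs' : a <= s' <= b /\ s' <= a + INR n * d /\ Rabs (s - s') <= d).
    { unfold s', Rmax. destruct (Rle_dec a (s - d)); repeat split; try apply Rabs_le; lra. }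
    destruct Hs' as (Hs'1 & Hs'2 & Hs'3).
    specialize (IH s' Hs'1 Hs'2). specialize (Hstep s s' Hs Hs'1 Hs'3). specialize (HC s Hs).
    pose proof (Rabs_triang (u s - u s') (u s')) as Htri. replace (u s - u s' + u s') with (u s) in Htri by ring.
    rewrite Rmult_plus_distr_r, Rmult_1_l. lra.
Qed.

Lemma continuous_2d_bounded_on_rect (g : R -> R -> R) a b a' b' :
  (forall p : R * R, continuous (fun q : R * R => g (fst q) (snd q)) p) ->
  exists M, 0 <= M /\ forall x y, a <= x <= b -> a' <= y <= b' -> Rabs (g x y) <= M.
Proof.
  intros Hc.
  destruct (continuous_2d_unif_on_rect g a b a' b' 1 Hc Rlt_0_1) as [d [Hd Huc]].
  destruct (INR_unbounded ((Rabs (b - a) + Rabs (b' - a')) / (d / 2))) as [n Hn].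
  assert (Hnd : Rabs (b - a) + Rabs (b' - a') <= INR n * (d / 2)).
  { apply Rmult_gt_compat_r with (r := d / 2) in Hn; [|lra].
    replace ((Rabs (b - a) + Rabs (b' - a')) / (d / 2) * (d / 2)) with (Rabs (b - a) + Rabs (b' - a')) in Hn
      by (field; lra).
    lra. }
  pose proof (Rle_abs (b - a)). pose proof (Rle_abs (b' - a')).
  pose proof (Rabs_pos (b - a)). pose proof (Rabs_pos (b' - a')).
  exists (Rabs (g a a') + INR n * 1 + INR n * 1). split.
  { pose proof (pos_INR n). pose proof (Rabs_pos (g a a')). lra. }
  intros x y Hx Hy.
  assert (Hax : Rabs (g x a') <= Rabs (g a a') + INR n * 1).
  { apply (abs_le_of_bounded_steps (fun x => g x a') a b (d / 2)); [lra| lra| |exact Hx].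
    intros s s' Hs Hs' Hss. left. apply Huc; [exact Hs| lra| lra| rewrite Rminus_eq_0, Rabs_R0; lra]. }
  assert (Hxy : Rabs (g x y) <= Rabs (g x a') + INR n * 1).
  { apply (abs_le_of_bounded_steps (g x) a' b' (d / 2)); [lra| lra| |exact Hy].
    intros s s' Hs Hs' Hss. left. apply Huc; [exact Hx| exact Hs| rewrite Rminus_eq_0, Rabs_R0; lra| lra]. }
  lra.
Qed.

Lemma periodic_reduce (f : R -> R -> R) L : 0 < L -> (forall x y, f (x + L) y = f x y) ->
  forall x, exists x', 0 <= x' <= L /\ forall y, f x y = f x' y.
Proof.
  intros HL Hp.
  assert (Hred : forall n : nat, forall z, 0 <= z <= INR n * L -> exists z', 0 <= z' <= L /\ forall y, f z y = f z' y).
  { induction n as [|n IH]; intros z Hz.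
    - exists z. split; [simpl in Hz; lra| auto].
    - destruct (Rle_dec z L).
      + exists z. split; [lra| auto].
      + rewrite S_INR in Hz. destruct (IH (z - L)) as [z' [Hz' Hf]]; [lra|].
        exists z'. split; [exact Hz'|]. intro y. rewrite <- Hf.
        replace z with ((z - L) + L) at 1 by ring. apply Hp. }
  intro x. destruct (INR_unbounded (Rabs x / L)) as [N HN].
  assert (HN2 : Rabs x < INR N * L).
  { apply Rmult_gt_compat_r with (r := L) in HN; [|exact HL].
    unfold Rdiv in HN. rewrite Rmult_assoc, Rinv_l, Rmult_1_r in HN by lra. lra. }
  destruct (Hred (N + N)%nat (x + INR N * L)) as [z' [Hz' Hf]].
  { rewrite plus_INR. pose proof (Rle_abs x). pose proof (Rle_abs (- x)). rewrite Rabs_Ropp in *. lra. }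
  exists z'. split; [exact Hz'|]. intro y. rewrite <- Hf. symmetry. apply (periodic_nat f L Hp).
Qed.

Lemma periodic_bounded_on_strip (g : R -> R -> R) L a b : 0 < L ->
  (forall p : R * R, continuous (fun q : R * R => g (fst q) (snd q)) p) ->
  (forall x y, g (x + L) y = g x y) ->
  exists M, 0 <= M /\ forall x y, a <= y <= b -> Rabs (g x y) <= M.
Proof.
  intros HL Hc Hp. destruct (continuous_2d_bounded_on_rect g 0 L a b Hc) as [M [HM0 HM]].
  exists M. split; [exact HM0|]. intros x y Hy.
  destruct (periodic_reduce g L HL Hp x) as [x' [Hx' Hg]]. rewrite Hg. apply HM; auto.
Qed.

Lemma Derive_MVT (g : R -> R) (y1 y2 : R) : (forall t, ex_derive g t) ->
  exists c, Rmin y1 y2 <= c <= Rmax y1 y2 /\ g y1 - g y2 = Derive g c * (y1 - y2).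
Proof.
  intros Hd. destruct (MVT_gen g y2 y1 (Derive g)) as [c [Hc E]].
  - intros x _. apply Derive_correct, Hd.
  - intros x _. apply continuity_pt_filterlim, (is_derive_continuous g x (Derive g x)), Derive_correct, Hd.
  - exists c. rewrite Rmin_comm, Rmax_comm. auto.
Qed.

Lemma between_in_interval a b y1 y2 c :
  a <= y1 <= b -> a <= y2 <= b -> Rmin y1 y2 <= c <= Rmax y1 y2 -> a <= c <= b.
Proof. intros H1 H2 H3. unfold Rmin, Rmax in H3. destruct (Rle_dec y1 y2); lra. Qed.

Lemma Lipschitz_of_Derive_bound (g : R -> R) a b Lam : (forall t, ex_derive g t) ->
  (forall y, a <= y <= b -> Rabs (Derive g y) <= Lam) ->
  forall y1 y2, a <= y1 <= b -> a <= y2 <= b -> Rabs (g y1 - g y2) <= Lam * Rabs (y1 - y2).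
Proof.
  intros Hd HD y1 y2 Hy1 Hy2. destruct (Derive_MVT g y1 y2 Hd) as [c [Hc ->]].
  rewrite Rabs_mult. apply Rmult_le_compat_r; [apply Rabs_pos|].
  apply HD, (between_in_interval a b y1 y2 c Hy1 Hy2 Hc).
Qed.

Lemma strongly_monotone_of_Derive_ge (g : R -> R) a b m : (forall t, ex_derive g t) ->
  (forall y, a <= y <= b -> m <= Derive g y) ->
  forall y1 y2, a <= y1 <= b -> a <= y2 <= b -> m * (y1 - y2)^2 <= (g y1 - g y2) * (y1 - y2).
Proof.
  intros Hd HD y1 y2 Hy1 Hy2. destruct (Derive_MVT g y1 y2 Hd) as [c [Hc ->]].
  specialize (HD c (between_in_interval a b y1 y2 c Hy1 Hy2 Hc)).
  pose proof (pow2_ge_0 (y1 - y2)). simpl in *. nra.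
Qed.

Lemma inf_from_le x0 g : bounded_from x0 g -> forall x, x0 <= x -> inf_from x0 g <= g x.
Proof.
  intros [M HM] x Hx. unfold inf_from.
  destruct (Glb_Rbar_correct (fun y => exists x, x0 <= x /\ y = g x)) as [H1 H2].
  revert H1 H2. destruct (Glb_Rbar _) as [l| |]; simpl; intros H1 H2.
  - exact (H1 (g x) (ex_intro _ x (conj Hx eq_refl))).
  - exfalso. exact (H1 (g x) (ex_intro _ x (conj Hx eq_refl))).
  - exfalso. apply (H2 (Finite (- M))). intros y [t [Ht ->]]. simpl.
    specialize (HM t Ht). apply Rabs_le_between in HM. lra.
Qed.

Lemma le_sup_from x0 g : bounded_from x0 g -> forall x, x0 <= x -> g x <= sup_from x0 g.
Proof.
  intros [M HM] x Hx. unfold sup_from.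
  destruct (Lub_Rbar_correct (fun y => exists x, x0 <= x /\ y = g x)) as [H1 H2].
  revert H1 H2. destruct (Lub_Rbar _) as [l| |]; simpl; intros H1 H2.
  - exact (H1 (g x) (ex_intro _ x (conj Hx eq_refl))).
  - exfalso. apply (H2 (Finite M)). intros y [t [Ht ->]]. simpl.
    specialize (HM t Ht). apply Rabs_le_between in HM. lra.
  - exfalso. exact (H1 (g x) (ex_intro _ x (conj Hx eq_refl))).
Qed.

(** * Global solutions of a bounded Lipschitz equation *)

Section Picard.

Variables (F : R -> R -> R) (K Lam x0 p s : R).
Hypothesis HFc : forall q : R * R, continuous (fun q : R * R => F (fst q) (snd q)) q.
Hypothesis HFK : forall t y, Rabs (F t y) <= K.
Hypothesis HFL : forall t y1 y2, Rabs (F t y1 - F t y2) <= Lam * Rabs (y1 - y2).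
Hypothesis HLam : 0 <= Lam.

Fixpoint picard_iter (n : nat) : (R -> R) * (R -> R) :=
  match n with
  | O => (fun _ => p, fun _ => s)
  | S n => (fun t => p + RInt (snd (picard_iter n)) x0 t,
            fun t => s + RInt (fun tau => F tau (fst (picard_iter n) tau)) x0 t)
  end.

Lemma picard_iter_continuous n t :
  continuous (fst (picard_iter n)) t /\ continuous (snd (picard_iter n)) t.
Proof.
  revert t. induction n as [|n IH]; intros t; simpl.
  - split; apply continuous_const.
  - split; apply (continuous_plus (V := R_NormedModule)); try apply continuous_const;
      eapply is_derive_continuous, is_derive_RInt_continuous.
    + intros tau. apply IH.
    + intros tau. exact (continuous_fun2_comp F _ tau HFc (proj1 (IH tau))).
Qed.

(* Bielecki weight: with k = 2 (1 + Lam), each iteration halves the weighted distance. *)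
Let k := 2 * (1 + Lam).
Let C := (Rabs s + K) / k.

Lemma picard_map_halves (Y1 Z1 Y0 Z0 : R -> R) B t :
  (forall t, continuous Y1 t /\ continuous Y0 t /\ continuous Z1 t /\ continuous Z0 t) ->
  (forall tau, Rabs (Y1 tau - Y0 tau) + Rabs (Z1 tau - Z0 tau) <= B * exp (k * Rabs (tau - x0))) ->
  Rabs (RInt Z1 x0 t - RInt Z0 x0 t) +
  Rabs (RInt (fun tau => F tau (Y1 tau)) x0 t - RInt (fun tau => F tau (Y0 tau)) x0 t)
  <= B / 2 * exp (k * Rabs (t - x0)).
Proof.
  intros Hc HB.
  assert (Hk : 0 < k) by (unfold k; lra).
  assert (HFY1 : forall t, continuous (fun tau => F tau (Y1 tau)) t)
    by (intros t'; exact (continuous_fun2_comp F Y1 t' HFc (proj1 (Hc t')))).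
  assert (HFY0 : forall t, continuous (fun tau => F tau (Y0 tau)) t)
    by (intros t'; exact (continuous_fun2_comp F Y0 t' HFc (proj1 (proj2 (Hc t'))))).
  rewrite <- (RInt_minus_R Z1 Z0), <- (RInt_minus_R _ _ _ _ HFY1 HFY0)
    by (intros t'; apply Hc).
  assert (A1 : Rabs (RInt (fun tau => Z1 tau - Z0 tau) x0 t) <= B * exp (k * Rabs (t - x0)) / k).
  { apply abs_RInt_le_exp_between; auto.
    - intros tau. apply (continuous_minus (V := R_NormedModule)); apply Hc.
    - intros tau _. specialize (HB tau). pose proof (Rabs_pos (Y1 tau - Y0 tau)). lra. }
  assert (A2 : Rabs (RInt (fun tau => F tau (Y1 tau) - F tau (Y0 tau)) x0 t)
               <= (Lam * B) * exp (k * Rabs (t - x0)) / k).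
  { apply abs_RInt_le_exp_between; auto.
    - intros tau. apply (continuous_minus (V := R_NormedModule)); [apply HFY1| apply HFY0].
    - intros tau _. specialize (HB tau). specialize (HFL tau (Y1 tau) (Y0 tau)).
      pose proof (Rabs_pos (Z1 tau - Z0 tau)).
      assert (Lam * Rabs (Y1 tau - Y0 tau) <= Lam * (B * exp (k * Rabs (tau - x0))))
        by (apply Rmult_le_compat_l; lra).
      lra. }
  assert (E : B * exp (k * Rabs (t - x0)) / k + Lam * B * exp (k * Rabs (t - x0)) / k =
              B / 2 * exp (k * Rabs (t - x0))) by (unfold k; field; lra).
  lra.
Qed.

Lemma picard_iter_step n t :
  Rabs (fst (picard_iter (S n)) t - fst (picard_iter n) t) +
  Rabs (snd (picard_iter (S n)) t - snd (picard_iter n) t)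
  <= C * exp (k * Rabs (t - x0)) * (1/2)^n.
Proof.
  assert (Hk : 0 < k) by (unfold k; lra).
  revert t. induction n as [|n IH]; intros t.
  - simpl. rewrite !Rplus_minus_l.
    pose proof (abs_RInt_le_const_between (fun _ => s) x0 t (Rabs s)
                  (fun tau => continuous_const s tau) (fun _ _ => Rle_refl _)).
    pose proof (abs_RInt_le_const_between (fun tau => F tau p) x0 t K
                  (fun tau => continuous_fun2_comp F _ tau HFc (continuous_const p tau)) (fun tau _ => HFK tau p)).
    pose proof (exp_ineq1_le (k * Rabs (t - x0))).
    assert (Hd : Rabs (t - x0) * Rabs s + Rabs (t - x0) * K = C * (k * Rabs (t - x0))) by (unfold C; field; lra).
    assert (0 <= C).
    { unfold C. pose proof (Rabs_pos s). pose proof (HFK 0 0). pose proof (Rabs_pos (F 0 0)).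
      apply Rdiv_le_0_compat; lra. }
    assert (C * (k * Rabs (t - x0)) <= C * exp (k * Rabs (t - x0))) by (apply Rmult_le_compat_l; lra).
    lra.
  - change (Rabs ((p + RInt (snd (picard_iter (S n))) x0 t) - (p + RInt (snd (picard_iter n)) x0 t)) +
            Rabs ((s + RInt (fun tau => F tau (fst (picard_iter (S n)) tau)) x0 t) -
                  (s + RInt (fun tau => F tau (fst (picard_iter n) tau)) x0 t))
            <= C * exp (k * Rabs (t - x0)) * (1/2)^(S n)).
    replace ((p + RInt (snd (picard_iter (S n))) x0 t) - (p + RInt (snd (picard_iter n)) x0 t))
      with (RInt (snd (picard_iter (S n))) x0 t - RInt (snd (picard_iter n)) x0 t) by ring.
    replace ((s + RInt (fun tau => F tau (fst (picard_iter (S n)) tau)) x0 t) -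
             (s + RInt (fun tau => F tau (fst (picard_iter n) tau)) x0 t))
      with (RInt (fun tau => F tau (fst (picard_iter (S n)) tau)) x0 t -
            RInt (fun tau => F tau (fst (picard_iter n) tau)) x0 t) by ring.
    eapply Rle_trans; [apply (picard_map_halves _ _ _ _ (C * (1/2)^n))|].
    + intros t'. destruct (picard_iter_continuous (S n) t'), (picard_iter_continuous n t'). tauto.
    + intros tau. rewrite Rmult_assoc, (Rmult_comm ((1/2)^n)), <- Rmult_assoc. apply IH.
    + right. simpl. field.
Qed.

Definition picard_lim (t : R) : R := Lim_seq (fun n => fst (picard_iter n) t).
Definition picard_lim1 (t : R) : R := Lim_seq (fun n => snd (picard_iter n) t).

Let weight t := 2 * (C * exp (k * Rabs (t - x0))).

Lemma picard_weight_le t R0 : Rabs (t - x0) <= R0 -> weight t <= 2 * (C * exp (k * R0)).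
Proof.
  intros Ht. unfold weight. assert (0 <= C).
  { unfold C, k. pose proof (Rabs_pos s). pose proof (HFK 0 0). pose proof (Rabs_pos (F 0 0)).
    apply Rdiv_le_0_compat; lra. }
  apply Rmult_le_compat_l; [lra|]. apply Rmult_le_compat_l; [lra|].
  apply exp_le_mono, Rmult_le_compat_l; [unfold k; lra| exact Ht].
Qed.

Lemma picard_lim_rate n t :
  Rabs (fst (picard_iter n) t - picard_lim t) <= weight t * (1/2)^n /\
  Rabs (snd (picard_iter n) t - picard_lim1 t) <= weight t * (1/2)^n.
Proof.
  split; [apply (geometric_rate_Lim_seq (fun n => fst (picard_iter n) t))
         |apply (geometric_rate_Lim_seq (fun n => snd (picard_iter n) t))];
    intros m; pose proof (picard_iter_step m t);
    pose proof (Rabs_pos (fst (picard_iter (S m)) t - fst (picard_iter m) t));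
    pose proof (Rabs_pos (snd (picard_iter (S m)) t - snd (picard_iter m) t)); lra.
Qed.

Lemma picard_lim_continuous t : continuous picard_lim t /\ continuous picard_lim1 t.
Proof.
  set (r := fun n => 2 * (C * exp (k * (Rabs (t - x0) + 1))) * (1/2)^n).
  assert (Hr : is_lim_seq r 0).
  { unfold r. replace (Finite 0) with (Rbar_mult (2 * (C * exp (k * (Rabs (t - x0) + 1)))) 0)
      by (simpl; f_equal; ring).
    apply is_lim_seq_scal_l, is_lim_seq_geom. rewrite Rabs_right; lra. }
  assert (Hloc : forall n y, t - 1 < y < t + 1 -> weight y * (1/2)^n <= r n).
  { intros n y Hy. apply Rmult_le_compat_r; [apply pow_le; lra|]. apply picard_weight_le.
    replace (y - x0) with ((y - t) + (t - x0)) by ring.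
    assert (Rabs (y - t) <= 1) by (apply Rabs_le; lra).
    pose proof (Rabs_triang (y - t) (t - x0)). lra. }
  split; apply (continuous_Lim_seq_of_rate _ r t Hr).
  - intros n y _. exact (proj1 (picard_iter_continuous n y)).
  - intros n y Hy. eapply Rle_trans; [apply picard_lim_rate| apply Hloc, Hy].
  - intros n y _. exact (proj2 (picard_iter_continuous n y)).
  - intros n y Hy. eapply Rle_trans; [apply picard_lim_rate| apply Hloc, Hy].
Qed.

Lemma picard_lim_integral t :
  picard_lim t = p + RInt picard_lim1 x0 t /\
  picard_lim1 t = s + RInt (fun tau => F tau (picard_lim tau)) x0 t.
Proof.
  assert (HE : forall tau, Rmin x0 t <= tau <= Rmax x0 t -> weight tau <= weight t).
  { intros tau Htau. apply picard_weight_le. unfold Rmin, Rmax in Htau.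
    destruct (Rle_dec x0 t); [rewrite !Rabs_right| rewrite !Rabs_left1]; lra. }
  assert (HE0 : forall n tau, 0 <= weight tau * (1/2)^n).
  { intros n tau. pose proof (picard_lim_rate n tau) as [H _].
    pose proof (Rabs_pos (fst (picard_iter n) tau - picard_lim tau)). lra. }
  assert (Hlam : forall n, weight t * (1/2)^n <= (1 + Lam) * weight t * (1/2)^n)
    by (intros n; specialize (HE0 n t); nra).
  split.
  - apply (integral_equation_limit (fun n => fst (picard_iter n)) (fun n => snd (picard_iter n)))
      with (E := (1 + Lam) * weight t).
    + intros n tau. exact (proj2 (picard_iter_continuous n tau)).
    + intros tau. exact (proj2 (picard_lim_continuous tau)).
    + reflexivity.
    + intros n. eapply Rle_trans; [apply picard_lim_rate| apply Hlam].
    + intros n tau Htau. eapply Rle_trans; [apply picard_lim_rate|].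
      eapply Rle_trans; [|apply Hlam]. apply Rmult_le_compat_r; [apply pow_le; lra| apply HE, Htau].
  - apply (integral_equation_limit (fun n => snd (picard_iter n)) (fun n tau => F tau (fst (picard_iter n) tau)))
      with (E := (1 + Lam) * weight t).
    + intros n tau. exact (continuous_fun2_comp F _ tau HFc (proj1 (picard_iter_continuous n tau))).
    + intros tau. exact (continuous_fun2_comp F _ tau HFc (proj1 (picard_lim_continuous tau))).
    + reflexivity.
    + intros n. eapply Rle_trans; [apply picard_lim_rate| apply Hlam].
    + intros n tau Htau. eapply Rle_trans; [apply HFL|].
      assert (weight tau * (1/2)^n <= weight t * (1/2)^n)
        by (apply Rmult_le_compat_r; [apply pow_le; lra| apply HE, Htau]).
      pose proof (proj1 (picard_lim_rate n tau)). pose proof (HE0 n t).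
      assert (Lam * Rabs (fst (picard_iter n) tau - picard_lim tau) <= Lam * (weight t * (1/2)^n))
        by (apply Rmult_le_compat_l; lra).
      nra.
Qed.

Lemma picard_solution : solution F picard_lim picard_lim1 /\ picard_lim x0 = p /\ picard_lim1 x0 = s.
Proof.
  split; [|split].
  - intros t. split.
    + apply (is_derive_ext (fun t => p + RInt picard_lim1 x0 t)); [intros; symmetry; apply picard_lim_integral|].
      rewrite <- (Rplus_0_l (picard_lim1 t)).
      apply (is_derive_plus (V := R_NormedModule)); [exact (is_derive_const p t)|].
      apply is_derive_RInt_continuous. intros tau. exact (proj2 (picard_lim_continuous tau)).
    + apply (is_derive_ext (fun t => s + RInt (fun tau => F tau (picard_lim tau)) x0 t));
        [intros; symmetry; apply picard_lim_integral|].
      rewrite <- (Rplus_0_l (F t (picard_lim t))).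
      apply (is_derive_plus (V := R_NormedModule)); [exact (is_derive_const s t)|].
      apply (is_derive_RInt_continuous (fun tau => F tau (picard_lim tau))).
      intros tau. exact (continuous_fun2_comp F _ tau HFc (proj1 (picard_lim_continuous tau))).
  - rewrite (proj1 (picard_lim_integral x0)), RInt_point. apply Rplus_0_r.
  - rewrite (proj2 (picard_lim_integral x0)), RInt_point. apply Rplus_0_r.
Qed.

End Picard.

Lemma energy_rate_le (u v d Lam : R) : 0 <= Lam -> Rabs d <= Lam * Rabs u ->
  2 * u * v + 2 * v * d <= (1 + Lam) * (u * u + v * v).
Proof.
  intros HLam Hd.
  assert (A : v * d <= Rabs v * (Lam * Rabs u)).
  { eapply Rle_trans; [apply Rle_abs|]. rewrite Rabs_mult.
    apply Rmult_le_compat_l; [apply Rabs_pos| exact Hd]. }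
  pose proof (Rle_0_sqr (Rabs v - Rabs u)). pose proof (Rle_0_sqr (u - v)).
  pose proof (Rsqr_abs v). pose proof (Rsqr_abs u). pose proof (Rabs_pos u).
  unfold Rsqr in *. nra.
Qed.

Lemma solution_diff_sq_le_exp (F : R -> R -> R) Lam (Y1 Z1 Y2 Z2 : R -> R) x0 t :
  (forall t y1 y2, Rabs (F t y1 - F t y2) <= Lam * Rabs (y1 - y2)) -> 0 <= Lam ->
  solution F Y1 Z1 -> solution F Y2 Z2 -> x0 <= t ->
  (Y1 t - Y2 t)^2 + (Z1 t - Z2 t)^2 <=
  ((Y1 x0 - Y2 x0)^2 + (Z1 x0 - Z2 x0)^2) * exp ((1 + Lam) * (t - x0)).
Proof.
  intros HFL HLam H1 H2 Ht.
  set (c := 1 + Lam).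
  set (dY := fun tau => Y1 tau - Y2 tau). set (dZ := fun tau => Z1 tau - Z2 tau).
  set (dF := fun tau => F tau (Y1 tau) - F tau (Y2 tau)).
  set (En := fun tau => dY tau * dY tau + dZ tau * dZ tau).
  set (G := fun tau => En tau * exp (- c * (tau - x0))).
  set (G1 := fun tau => (2 * dY tau * dZ tau + 2 * dZ tau * dF tau - c * En tau) * exp (- c * (tau - x0))).
  assert (HdG : forall tau, is_derive G tau (G1 tau)).
  { intros tau.
    assert (HdY : is_derive dY tau (dZ tau)) by (apply (is_derive_minus Y1 Y2); [apply H1| apply H2]).
    assert (HdZ : is_derive dZ tau (dF tau)) by (apply (is_derive_minus Z1 Z2); [apply H1| apply H2]).
    assert (HE : is_derive En tau (dZ tau * dY tau + dY tau * dZ tau + (dF tau * dZ tau + dZ tau * dF tau))).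
    { apply (is_derive_plus (V := R_NormedModule));
        apply (is_derive_mult (K := R_AbsRing)); auto; intros; apply Rmult_comm. }
    assert (Hex : is_derive (fun tau => exp (- c * (tau - x0))) tau (- c * exp (- c * (tau - x0))))
      by (auto_derive; auto; unfold Rminus; ring).
    replace (G1 tau) with (plus (mult (dZ tau * dY tau + dY tau * dZ tau + (dF tau * dZ tau + dZ tau * dF tau))
                                      (exp (- c * (tau - x0))))
                                (mult (En tau) (- c * exp (- c * (tau - x0)))))
      by (unfold G1, En; simpl; unfold plus, mult; simpl; ring).
    apply (is_derive_mult (K := R_AbsRing) En (fun tau => exp (- c * (tau - x0))));
      [exact HE| exact Hex| apply Rmult_comm]. }
  assert (HG1 : forall tau, G1 tau <= 0).
  { intros tau. unfold G1. apply Rmult_le_0_r; [|left; apply exp_pos].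
    pose proof (energy_rate_le (dY tau) (dZ tau) (dF tau) Lam HLam (HFL tau (Y1 tau) (Y2 tau))).
    unfold En, c. lra. }
  assert (HGt : G t <= G x0).
  { destruct Ht as [Hlt| ->]; [|lra].
    destruct (is_derive_MVT G G1 x0 t Hlt (fun tau _ => HdG tau)) as [xi [_ Heq]].
    specialize (HG1 xi). nra. }
  unfold G in HGt. rewrite Rminus_eq_0, Rmult_0_r, exp_0, Rmult_1_r in HGt.
  assert (Hexp : exp (- c * (t - x0)) * exp (c * (t - x0)) = 1).
  { rewrite <- exp_plus, <- exp_0. f_equal. ring. }
  apply Rmult_le_compat_r with (r := exp (c * (t - x0))) in HGt; [|left; apply exp_pos].
  rewrite Rmult_assoc, Hexp, Rmult_1_r in HGt. unfold En, dY, dZ in HGt. simpl. lra.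
Qed.

(** * Shooting between the lower and the upper solution *)

Lemma exists_outside_disjoint_opens (A B : R -> Prop) sA sB :
  A sA -> B sB -> sA <= sB ->
  (forall s, A s -> exists e, 0 < e /\ forall s', Rabs (s' - s) < e -> A s') ->
  (forall s, B s -> exists e, 0 < e /\ forall s', Rabs (s' - s) < e -> B s') ->
  (forall s, A s -> B s -> False) ->
  exists s, ~ A s /\ ~ B s.
Proof.
  intros HA HB Hle HoA HoB Hdis.
  set (S := fun s => s <= sB /\ A s).
  destruct (completeness S) as [m [Hub Hlub]].
  { exists sB. intros x [Hx _]. exact Hx. }
  { exists sA. split; auto. }
  assert (HmB : m <= sB) by (apply Hlub; intros x [Hx _]; exact Hx).
  exists m. split.
  - intros Am.
    assert (m <> sB) by (intro; subst; eapply Hdis; eauto).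
    destruct (HoA m Am) as [e [He He2]].
    set (s' := m + Rmin e (sB - m) / 2).
    assert (0 < Rmin e (sB - m)) by (apply Rmin_pos; lra).
    pose proof (Rmin_l e (sB - m)). pose proof (Rmin_r e (sB - m)).
    assert (HS' : S s') by (split; [unfold s'; lra| apply He2; unfold s'; rewrite Rabs_right; lra]).
    specialize (Hub s' HS'). unfold s' in Hub. lra.
  - intros Bm.
    destruct (HoB m Bm) as [e [He He2]].
    destruct (classic (exists x, S x /\ m - e < x)) as [[x [[Hx1 Hx2] Hx3]]|Hno].
    + assert (x <= m) by (apply Hub; split; auto).
      apply (Hdis x Hx2), He2. rewrite Rabs_left1 by lra. lra.
    + assert (m <= m - e); [|lra].
      apply Hlub. intros x Hx. apply Rnot_lt_le. intros Hlt. apply Hno. exists x. auto.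
Qed.

Definition clamp (lo hi y : R) : R := Rmax lo (Rmin y hi).

Lemma clamp_between lo hi y : lo <= hi -> lo <= clamp lo hi y <= hi.
Proof. intros H. unfold clamp, Rmax, Rmin. destruct (Rle_dec y hi); destruct (Rle_dec lo _); lra. Qed.

Lemma clamp_id lo hi y : lo <= y <= hi -> clamp lo hi y = y.
Proof. intros H. unfold clamp. rewrite Rmin_left, Rmax_right; lra. Qed.

Lemma clamp_lo lo hi y : lo <= hi -> y <= lo -> clamp lo hi y = lo.
Proof. intros H Hy. unfold clamp. rewrite Rmin_left, Rmax_left; lra. Qed.

Lemma clamp_hi lo hi y : lo <= hi -> hi <= y -> clamp lo hi y = hi.
Proof. intros H Hy. unfold clamp. rewrite Rmin_right, Rmax_right; lra. Qed.

Lemma clamp_Lipschitz lo hi y1 y2 : Rabs (clamp lo hi y1 - clamp lo hi y2) <= Rabs (y1 - y2).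
Proof.
  unfold clamp, Rmax, Rmin. destruct (Rle_dec y1 hi); destruct (Rle_dec y2 hi);
  repeat match goal with |- context [Rle_dec ?x ?y] => destruct (Rle_dec x y) end;
    unfold Rabs; repeat destruct Rcase_abs; lra.
Qed.

Section Shooting.

Variables (f : R -> R -> R) (x0 : R) (alpha beta alpha1 alpha2 beta1 beta2 : R -> R) (a b K Lam : R).
Hypothesis Hfc : forall p : R * R, continuous (fun q : R * R => f (fst q) (snd q)) p.
Hypothesis HfK : forall x y, a <= y <= b -> Rabs (f x y) <= K.
Hypothesis HfL : forall x y1 y2, a <= y1 <= b -> a <= y2 <= b ->
  Rabs (f x y1 - f x y2) <= Lam * Rabs (y1 - y2).
Hypothesis HLam : 0 <= Lam.
Hypothesis Had : twice_diff_from x0 alpha alpha1 alpha2.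
Hypothesis Hbd : twice_diff_from x0 beta beta1 beta2.
Hypothesis Hab : forall x, x0 < x -> alpha x < beta x.
Hypothesis Halpha : forall x, x0 < x -> alpha2 x > f x (alpha x).
Hypothesis Hbeta : forall x, x0 < x -> beta2 x < f x (beta x).
Hypothesis Ha : forall x, x0 <= x -> a <= alpha x.
Hypothesis Hb : forall x, x0 <= x -> beta x <= b.

Lemma lower_le_upper_x0 : alpha x0 <= beta x0.
Proof.
  apply Rnot_lt_le. intros Hlt.
  assert (Hc : continuous (fun t => alpha t - beta t) x0).
  { apply (continuous_minus (V := R_NormedModule));
      [apply (is_derive_continuous alpha x0 (alpha1 x0))| apply (is_derive_continuous beta x0 (beta1 x0))];
      [apply Had| apply Hbd]; lra. }
  apply continuity_pt_filterlim in Hc.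
  destruct (Hc (alpha x0 - beta x0)) as [d [Hd Hd2]]; [lra|].
  assert (Hx : D_x no_cond x0 (x0 + d / 2) /\ R_dist (x0 + d / 2) x0 < d).
  { split; [split; [exact I| lra]|]. unfold R_dist. rewrite Rabs_right; lra. }
  specialize (Hd2 _ Hx). unfold R_dist in Hd2. simpl in Hd2. apply Rabs_def2 in Hd2.
  specialize (Hab (x0 + d / 2) ltac:(lra)). lra.
Qed.

Let alpha_ext t := alpha (Rmax t x0).
Let beta_ext t := beta (Rmax t x0).

Lemma barriers_ordered t : alpha_ext t <= beta_ext t.
Proof.
  unfold alpha_ext, beta_ext. destruct (Rle_lt_or_eq_dec _ _ (Rmax_r t x0)) as [Hlt| <-].
  - left. apply Hab, Hlt.
  - apply lower_le_upper_x0.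
Qed.

Lemma barriers_continuous (p : R * R) :
  continuous (fun q : R * R => alpha_ext (fst q)) p /\ continuous (fun q : R * R => beta_ext (fst q)) p.
Proof.
  assert (Hm : continuous (fun q : R * R => Rmax (fst q) x0) p).
  { apply continuous_Rmax; [destruct p; apply continuous_fst| apply continuous_const]. }
  split; apply (continuous_comp (fun q : R * R => Rmax (fst q) x0)); auto.
  - apply (is_derive_continuous _ _ (alpha1 (Rmax (fst p) x0))), Had, Rmax_r.
  - apply (is_derive_continuous _ _ (beta1 (Rmax (fst p) x0))), Hbd, Rmax_r.
Qed.

Let f_trunc t y := f t (clamp (alpha_ext t) (beta_ext t) y).

Lemma f_trunc_range t y : a <= clamp (alpha_ext t) (beta_ext t) y <= b.
Proof.
  pose proof (clamp_between (alpha_ext t) (beta_ext t) y (barriers_ordered t)).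
  pose proof (Ha (Rmax t x0) (Rmax_r _ _)). pose proof (Hb (Rmax t x0) (Rmax_r _ _)).
  unfold alpha_ext, beta_ext in *. lra.
Qed.

Lemma f_trunc_continuous (p : R * R) : continuous (fun q : R * R => f_trunc (fst q) (snd q)) p.
Proof.
  apply (continuous_comp_2 (fun q : R * R => fst q)
           (fun q : R * R => clamp (alpha_ext (fst q)) (beta_ext (fst q)) (snd q)) f p).
  - destruct p. apply continuous_fst.
  - destruct (barriers_continuous p). unfold clamp.
    apply continuous_Rmax; [auto|]. apply continuous_Rmin; [destruct p; apply continuous_snd| auto].
  - apply Hfc.
Qed.

Lemma f_trunc_Lipschitz t y1 y2 : Rabs (f_trunc t y1 - f_trunc t y2) <= Lam * Rabs (y1 - y2).
Proof.
  eapply Rle_trans; [apply HfL; apply f_trunc_range|].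
  apply Rmult_le_compat_l; [exact HLam| apply clamp_Lipschitz].
Qed.

Definition shot (s : R) (Y Z : R -> R) := solution f_trunc Y Z /\ Y x0 = alpha x0 /\ Z x0 = s.

Lemma shot_exists s : exists Y Z, shot s Y Z.
Proof.
  exists (picard_lim f_trunc x0 (alpha x0) s), (picard_lim1 f_trunc x0 (alpha x0) s).
  apply (picard_solution f_trunc K Lam); auto.
  - apply f_trunc_continuous.
  - intros t y. apply HfK, f_trunc_range.
  - apply f_trunc_Lipschitz.
Qed.

Lemma shot_dependence s s' Y Z Y' Z' t :
  shot s Y Z -> shot s' Y' Z' -> x0 <= t ->
  (Y' t - Y t)^2 <= (s' - s)^2 * exp ((1 + Lam) * (t - x0)).
Proof.
  intros [HS [HY0 HZ0]] [HS' [HY0' HZ0']] Ht.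
  pose proof (solution_diff_sq_le_exp f_trunc Lam Y' Z' Y Z x0 t f_trunc_Lipschitz HLam HS' HS Ht) as Hd.
  rewrite HY0, HY0', HZ0, HZ0', Rminus_eq_0 in Hd.
  pose proof (pow2_ge_0 (Z' t - Z t)). simpl in *. lra.
Qed.

Lemma below_persists s Y Z : shot s Y Z ->
  forall t1 t2, x0 < t1 <= t2 -> Y t1 < alpha t1 -> Y t2 < alpha t2.
Proof.
  intros [HS [HY0 _]] t1 t2 Ht Hlt.
  enough (Y t2 - alpha t2 < 0) by lra.
  apply (negative_persists (fun t => Y t - alpha t) (fun t => Z t - alpha1 t)
           (fun t => f_trunc t (Y t) - alpha2 t) x0) with t1; [| lra| | lra| lra].
  - intros t Ht'. split; apply (is_derive_minus (V := R_NormedModule)); try apply HS; apply Had, Ht'.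
  - intros t Ht' Hneg. specialize (Halpha t Ht'). unfold f_trunc.
    rewrite clamp_lo by (apply barriers_ordered || (unfold alpha_ext; rewrite Rmax_left; lra)).
    unfold alpha_ext. rewrite Rmax_left; lra.
Qed.

Lemma above_persists s Y Z : shot s Y Z ->
  forall t1 t2, x0 < t1 <= t2 -> beta t1 < Y t1 -> beta t2 < Y t2.
Proof.
  intros [HS [HY0 _]] t1 t2 Ht Hlt.
  enough (beta t2 - Y t2 < 0) by lra.
  apply (negative_persists (fun t => beta t - Y t) (fun t => beta1 t - Z t)
           (fun t => beta2 t - f_trunc t (Y t)) x0) with t1; [| | | lra| lra].
  - intros t Ht'. split; apply (is_derive_minus (V := R_NormedModule)); try apply HS; apply Hbd, Ht'.
  - rewrite HY0. pose proof lower_le_upper_x0. lra.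
  - intros t Ht' Hneg. specialize (Hbeta t Ht'). unfold f_trunc.
    rewrite clamp_hi by (apply barriers_ordered || (unfold beta_ext; rewrite Rmax_left; lra)).
    unfold beta_ext. rewrite Rmax_left; lra.
Qed.

Definition undershoot s := exists Y Z, shot s Y Z /\ exists t, x0 < t /\ Y t < alpha t.
Definition overshoot s := exists Y Z, shot s Y Z /\ exists t, x0 < t /\ beta t < Y t.

Lemma undershoot_overshoot_disjoint s : undershoot s -> overshoot s -> False.
Proof.
  intros [Y [Z [HS [t1 [Ht1 Hl1]]]]] [Y' [Z' [HS' [t2 [Ht2 Hl2]]]]].
  set (t := Rmax t1 t2). assert (t1 <= t /\ t2 <= t) by (split; [apply Rmax_l| apply Rmax_r]).
  assert (Y t < alpha t) by (apply (below_persists s Y Z HS t1); auto; lra).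
  assert (beta t < Y' t) by (apply (above_persists s Y' Z' HS' t2); auto; lra).
  pose proof (shot_dependence s s Y Z Y' Z' t HS HS' ltac:(lra)) as Hd.
  rewrite Rminus_eq_0 in Hd. simpl in Hd.
  pose proof (Hab t ltac:(lra)). nra.
Qed.

Lemma shot_near s Y Z t : shot s Y Z -> x0 <= t -> forall d, 0 < d ->
  exists e, 0 < e /\ forall s', Rabs (s' - s) < e -> exists Y' Z', shot s' Y' Z' /\ Rabs (Y' t - Y t) < d.
Proof.
  intros HS Ht d Hd.
  set (w := exp ((1 + Lam) * (t - x0) / 2)).
  assert (Hw : 0 < w) by apply exp_pos.
  assert (Hw2 : w * w = exp ((1 + Lam) * (t - x0))) by (unfold w; rewrite <- exp_plus; f_equal; field).
  exists (d / w). split; [apply Rdiv_lt_0_compat; lra|].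
  intros s' Hs'. destruct (shot_exists s') as [Y' [Z' HS']]. exists Y', Z'. split; [exact HS'|].
  pose proof (shot_dependence s s' Y Z Y' Z' t HS HS' Ht) as Hdep. rewrite <- Hw2 in Hdep.
  assert (Habs : Rabs (Y' t - Y t) <= Rabs (s' - s) * w).
  { rewrite <- (Rabs_right w), <- Rabs_mult by lra. apply Rsqr_le_abs_0. unfold Rsqr. simpl in Hdep. lra. }
  apply (Rmult_lt_compat_r w) in Hs'; [|exact Hw].
  unfold Rdiv in Hs'. rewrite Rmult_assoc, Rinv_l, Rmult_1_r in Hs' by lra. lra.
Qed.

Lemma undershoot_open s : undershoot s -> exists e, 0 < e /\ forall s', Rabs (s' - s) < e -> undershoot s'.
Proof.
  intros [Y [Z [HS [t [Ht Hlt]]]]].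
  destruct (shot_near s Y Z t HS ltac:(lra) (alpha t - Y t) ltac:(lra)) as [e [He He2]].
  exists e. split; [exact He|]. intros s' Hs'. destruct (He2 s' Hs') as [Y' [Z' [HS' Hd]]].
  exists Y', Z'. split; [exact HS'|]. exists t. split; [exact Ht|]. apply Rabs_def2 in Hd. lra.
Qed.

Lemma overshoot_open s : overshoot s -> exists e, 0 < e /\ forall s', Rabs (s' - s) < e -> overshoot s'.
Proof.
  intros [Y [Z [HS [t [Ht Hlt]]]]].
  destruct (shot_near s Y Z t HS ltac:(lra) (Y t - beta t) ltac:(lra)) as [e [He He2]].
  exists e. split; [exact He|]. intros s' Hs'. destruct (He2 s' Hs') as [Y' [Z' [HS' Hd]]].
  exists Y', Z'. split; [exact HS'|]. exists t. split; [exact Ht|]. apply Rabs_def2 in Hd. lra.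
Qed.

Lemma shot_slope s Y Z : shot s Y Z -> Rabs (Y (x0 + 1) - alpha x0 - s) <= K.
Proof.
  intros [HS [HY0 HZ0]].
  destruct (is_derive_MVT Y Z x0 (x0 + 1)) as [xi [Hxi E1]]; [lra| intros; apply HS|].
  destruct (is_derive_MVT Z (fun t => f_trunc t (Y t)) x0 xi) as [eta [Heta E2]]; [lra| intros; apply HS|].
  rewrite HY0 in E1. rewrite HZ0 in E2.
  replace (Y (x0 + 1) - alpha x0 - s) with (f_trunc eta (Y eta) * (xi - x0)) by nra.
  rewrite Rabs_mult, (Rabs_right (xi - x0)) by lra.
  assert (Rabs (f_trunc eta (Y eta)) <= K) by apply HfK, f_trunc_range.
  pose proof (Rabs_pos (f_trunc eta (Y eta))). nra.
Qed.

Lemma undershoot_steep_down : undershoot (alpha (x0 + 1) - alpha x0 - K - 1).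
Proof.
  destruct (shot_exists (alpha (x0 + 1) - alpha x0 - K - 1)) as [Y [Z HS]].
  exists Y, Z. split; [exact HS|]. exists (x0 + 1). split; [lra|].
  pose proof (shot_slope _ _ _ HS) as Hs. apply Rabs_le_between in Hs. lra.
Qed.

Lemma overshoot_steep_up : overshoot (beta (x0 + 1) - alpha x0 + K + 1).
Proof.
  destruct (shot_exists (beta (x0 + 1) - alpha x0 + K + 1)) as [Y [Z HS]].
  exists Y, Z. split; [exact HS|]. exists (x0 + 1). split; [lra|].
  pose proof (shot_slope _ _ _ HS) as Hs. apply Rabs_le_between in Hs. lra.
Qed.

Lemma f_trunc_inside t y : x0 <= t -> alpha t <= y <= beta t -> f_trunc t y = f t y.
Proof. intros Ht Hy. unfold f_trunc, alpha_ext, beta_ext. rewrite Rmax_left by exact Ht. rewrite clamp_id; auto. Qed.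

(* At a contact point the difference would have a local minimum with negative second derivative. *)
Lemma shot_strictly_between s Y Z : shot s Y Z ->
  (forall t, x0 < t -> alpha t <= Y t <= beta t) -> forall t, x0 < t -> alpha t < Y t < beta t.
Proof.
  intros [HS _] Hin t Ht.
  assert (Hball : forall tau, Rabs (tau - t) < t - x0 -> x0 < tau) by (intros tau H; apply Rabs_def2 in H; lra).
  assert (HF : f_trunc t (Y t) = f t (Y t)) by (apply f_trunc_inside, Hin; lra).
  split; apply Rnot_le_lt; intros Hle.
  - assert (Heq : Y t = alpha t) by (specialize (Hin t Ht); lra).
    assert (f_trunc t (Y t) - alpha2 t < 0) by (rewrite HF, Heq; specialize (Halpha t Ht); lra).
    enough (0 <= f_trunc t (Y t) - alpha2 t) by lra.
    apply (local_min_second_derive_ge0 (fun t => Y t - alpha t) (fun t => Z t - alpha1 t) t (t - x0)); [lra| | |].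
    + intros tau Htau. apply (is_derive_minus (V := R_NormedModule)); [apply HS| apply Had; left; auto].
    + apply (is_derive_minus (V := R_NormedModule)); [apply HS| apply Had; lra].
    + intros tau Htau. specialize (Hin tau (Hball tau Htau)). lra.
  - assert (Heq : Y t = beta t) by (specialize (Hin t Ht); lra).
    assert (beta2 t - f_trunc t (Y t) < 0) by (rewrite HF, Heq; specialize (Hbeta t Ht); lra).
    enough (0 <= beta2 t - f_trunc t (Y t)) by lra.
    apply (local_min_second_derive_ge0 (fun t => beta t - Y t) (fun t => beta1 t - Z t) t (t - x0)); [lra| | |].
    + intros tau Htau. apply (is_derive_minus (V := R_NormedModule)); [apply Hbd; left; auto| apply HS].
    + apply (is_derive_minus (V := R_NormedModule)); [apply Hbd; lra| apply HS].
    + intros tau Htau. specialize (Hin tau (Hball tau Htau)). lra.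
Qed.

Lemma shooting_solution : exists phi phi1 : R -> R,
  solution_from f x0 phi phi1 /\ (forall x, x0 < x -> alpha x < phi x < beta x) /\
  (forall x, x0 <= x -> a <= phi x <= b).
Proof.
  destruct (exists_outside_disjoint_opens undershoot overshoot _ _ undershoot_steep_down overshoot_steep_up)
    as [s [Hnu Hno]]; [| exact undershoot_open| exact overshoot_open| exact undershoot_overshoot_disjoint|].
  { assert (Hx0 : a <= alpha x0 <= b)
      by (pose proof lower_le_upper_x0; pose proof (Ha x0 (Rle_refl _)); pose proof (Hb x0 (Rle_refl _)); lra).
    pose proof (HfK x0 _ Hx0). pose proof (Rabs_pos (f x0 (alpha x0))).
    specialize (Hab (x0 + 1) ltac:(lra)). lra. }
  destruct (shot_exists s) as [Y [Z HS]].
  assert (Hin : forall t, x0 < t -> alpha t <= Y t <= beta t).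
  { intros t Ht. split; apply Rnot_lt_le; intros Hlt; [apply Hnu| apply Hno]; exists Y, Z; split; eauto. }
  assert (Hin0 : forall t, x0 <= t -> alpha t <= Y t <= beta t).
  { intros t [Ht| <-]; [apply Hin, Ht|]. destruct HS as [_ [-> _]]. pose proof lower_le_upper_x0. lra. }
  exists Y, Z. split; [|split].
  - intros t Ht. rewrite <- (f_trunc_inside t (Y t) Ht (Hin0 t Ht)). apply HS.
  - apply (shot_strictly_between s Y Z HS Hin).
  - intros t Ht. specialize (Hin0 t Ht). specialize (Ha t Ht). specialize (Hb t Ht). lra.
Qed.

End Shooting.

(** * Exponential contraction and the periodic solution *)

Lemma is_lim_exp_decay C c x0 : 0 < c -> is_lim (fun x => C * exp (- c * (x - x0))) p_infty 0.
Proof.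
  intros Hc. replace (Finite 0) with (Rbar_mult C 0) by (simpl; f_equal; ring).
  apply is_lim_scal_l, (is_lim_comp exp (fun x => - c * (x - x0)) p_infty 0 m_infty).
  - exact is_lim_exp_m.
  - apply is_lim_spec. intros M. exists (x0 + Rabs M / c). intros x Hx.
    assert (Rabs M < c * (x - x0)).
    { apply (Rmult_lt_reg_r (/ c)); [apply Rinv_0_lt_compat, Hc|].
      replace (c * (x - x0) * / c) with (x - x0) by (field; lra). unfold Rdiv in Hx. lra. }
    pose proof (Rle_abs (- M)) as HM. rewrite Rabs_Ropp in HM. lra.
  - exists 0. intros x _. discriminate.
Qed.

Definition barrier (M k A T t : R) : R := M * (exp (- k * (t - A)) + exp (- k * (T - t))).

Lemma barrier_derivatives M k A T t :
  is_derive (barrier M k A T) t (k * (M * (exp (- k * (T - t)) - exp (- k * (t - A))))) /\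
  is_derive (fun t => k * (M * (exp (- k * (T - t)) - exp (- k * (t - A))))) t (k * k * barrier M k A T t).
Proof. unfold barrier. split; auto_derive; auto; unfold Rminus; ring. Qed.

Section Contraction.

Variables (f : R -> R -> R) (a b m : R).
Hypothesis Hm : 0 < m.
Hypothesis Hmono : forall t u v, a <= u <= b -> a <= v <= b -> m * (u - v)^2 <= (f t u - f t v) * (u - v).
Variables (y1 z1 y2 z2 : R -> R) (A : R).
Hypothesis Hs1 : solution_from f A y1 z1.
Hypothesis Hs2 : solution_from f A y2 z2.
Hypothesis Hb1 : forall t, A <= t -> a <= y1 t <= b.
Hypothesis Hb2 : forall t, A <= t -> a <= y2 t <= b.

Let k := Rmin 1 m.
Let M := (b - a) * (b - a).
Let w t := y1 t - y2 t.

Lemma diff_sq_derivatives t : A <= t ->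
  is_derive (fun t => w t * w t) t (2 * (w t * (z1 t - z2 t))) /\
  is_derive (fun t => 2 * (w t * (z1 t - z2 t))) t
    (2 * ((z1 t - z2 t) * (z1 t - z2 t)) + 2 * (w t * (f t (y1 t) - f t (y2 t)))).
Proof.
  intros Ht.
  assert (Hw : is_derive w t (z1 t - z2 t))
    by (apply (is_derive_minus (V := R_NormedModule) y1 y2); [apply Hs1| apply Hs2]; lra).
  assert (Hw1 : is_derive (fun t => z1 t - z2 t) t (f t (y1 t) - f t (y2 t)))
    by (apply (is_derive_minus (V := R_NormedModule) z1 z2); [apply Hs1| apply Hs2]; lra).
  split.
  - replace (2 * (w t * (z1 t - z2 t))) with (plus (mult (z1 t - z2 t) (w t)) (mult (w t) (z1 t - z2 t)))
      by (unfold plus, mult; simpl; ring).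
    exact (is_derive_mult (K := R_AbsRing) w w t _ _ Hw Hw Rmult_comm).
  - replace (_ + _) with (2 * plus (mult (z1 t - z2 t) (z1 t - z2 t)) (mult (w t) (f t (y1 t) - f t (y2 t))))
      by (unfold plus, mult; simpl; ring).
    apply is_derive_scal.
    exact (is_derive_mult (K := R_AbsRing) w _ t _ _ Hw Hw1 Rmult_comm).
Qed.

(* (w^2)'' >= 2 m w^2 >= k^2 w^2 while the barrier satisfies B'' = k^2 B, so w^2 - B has no
   positive interior maximum. *)
Lemma diff_sq_le_barrier T x : A <= x <= T -> w x * w x <= barrier M k A T x.
Proof.
  intros Hx.
  assert (Hk : 0 < k /\ k <= 1 /\ k <= m)
    by (unfold k; split; [apply Rmin_pos; lra| split; [apply Rmin_l| apply Rmin_r]]).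
  assert (HM : 0 <= M) by apply Rle_0_sqr.
  assert (Hw : forall t, A <= t -> w t * w t <= M)
    by (intros t Ht; specialize (Hb1 t Ht); specialize (Hb2 t Ht); unfold w, M; nra).
  enough (w x * w x - barrier M k A T x <= 0) by lra.
  apply (max_principle (fun t => w t * w t - barrier M k A T t)
           (fun t => 2 * (w t * (z1 t - z2 t)) - k * (M * (exp (- k * (T - t)) - exp (- k * (t - A)))))
           (fun t => 2 * ((z1 t - z2 t) * (z1 t - z2 t)) + 2 * (w t * (f t (y1 t) - f t (y2 t)))
                     - k * k * barrier M k A T t) A T); [| | |intros t Ht Hpos| exact Hx].
  - intros t Ht. destruct (diff_sq_derivatives t (proj1 Ht)), (barrier_derivatives M k A T t).
    split; apply (is_derive_minus (V := R_NormedModule)); assumption.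
  - unfold barrier. rewrite Rminus_eq_0, Rmult_0_r, exp_0. pose proof (Hw A (Rle_refl _)).
    pose proof (exp_pos (- k * (T - A))). nra.
  - unfold barrier. rewrite Rminus_eq_0, Rmult_0_r, exp_0. pose proof (Hw T ltac:(lra)).
    pose proof (exp_pos (- k * (T - A))). nra.
  - pose proof (Hmono t (y1 t) (y2 t) (Hb1 t ltac:(lra)) (Hb2 t ltac:(lra))) as Hmo. fold (w t) in Hmo.
    simpl in Hmo. pose proof (Rle_0_sqr (z1 t - z2 t)). unfold Rsqr in *.
    assert (0 <= w t * w t) by nra.
    assert (k * k * (w t * w t) <= 2 * m * (w t * w t)) by (apply Rmult_le_compat_r; nra).
    assert (0 < k * k * (w t * w t - barrier M k A T t)) by (apply Rmult_lt_0_compat; nra).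
    nra.
Qed.

Lemma solutions_contract x : A <= x -> Rabs (y1 x - y2 x) <= (b - a) * exp (- k * (x - A) / 2).
Proof.
  intros Hx.
  assert (Hk : 0 < k) by (unfold k; apply Rmin_pos; lra).
  assert (Hba : 0 <= b - a) by (specialize (Hb1 A (Rle_refl _)); lra).
  assert (Hsq : w x * w x <= M * exp (- k * (x - A))).
  { apply (le_of_le_plus_null_seq _ _ (fun n => M * exp (- k * INR n))).
    - replace (Finite 0) with (Rbar_mult M 0) by (simpl; f_equal; ring).
      apply is_lim_seq_scal_l, is_lim_seq_exp_neg, Hk.
    - intros n. pose proof (diff_sq_le_barrier (x + INR n) x ltac:(pose proof (pos_INR n); lra)) as H.
      unfold barrier in H. replace (x + INR n - x) with (INR n) in H by ring. lra. }
  assert (HR : M * exp (- k * (x - A)) = ((b - a) * exp (- k * (x - A) / 2)) * ((b - a) * exp (- k * (x - A) / 2))).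
  { unfold M. replace (- k * (x - A)) with (- k * (x - A) / 2 + - k * (x - A) / 2) at 1 by field.
    rewrite exp_plus. ring. }
  rewrite <- (Rabs_right ((b - a) * exp (- k * (x - A) / 2)))
    by (apply Rle_ge, Rmult_le_pos; [lra| left; apply exp_pos]).
  apply Rsqr_le_abs_0. unfold Rsqr. fold (w x). lra.
Qed.

End Contraction.

Lemma solution_derive_diff_le (f : R -> R -> R) a b Lam (y1 z1 y2 z2 : R -> R) A x eps :
  (forall t u v, a <= u <= b -> a <= v <= b -> Rabs (f t u - f t v) <= Lam * Rabs (u - v)) -> 0 <= Lam ->
  solution_from f A y1 z1 -> solution_from f A y2 z2 ->
  (forall t, A <= t -> a <= y1 t <= b) -> (forall t, A <= t -> a <= y2 t <= b) ->
  A <= x -> (forall t, x <= t <= x + 1 -> Rabs (y1 t - y2 t) <= eps) ->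
  Rabs (z1 x - z2 x) <= (2 + Lam) * eps.
Proof.
  intros HfL HLam Hs1 Hs2 Hb1 Hb2 Hx Heps.
  destruct (is_derive_MVT (fun t => y1 t - y2 t) (fun t => z1 t - z2 t) x (x + 1)) as [xi [Hxi E1]]; [lra| |].
  { intros t Ht. apply (is_derive_minus (V := R_NormedModule) y1 y2); [apply Hs1| apply Hs2]; lra. }
  destruct (is_derive_MVT (fun t => z1 t - z2 t) (fun t => f t (y1 t) - f t (y2 t)) x xi) as [eta [Heta E2]]; [lra| |].
  { intros t Ht. apply (is_derive_minus (V := R_NormedModule) z1 z2); [apply Hs1| apply Hs2]; lra. }
  assert (B1 : Rabs (z1 xi - z2 xi) <= 2 * eps).
  { replace (z1 xi - z2 xi) with ((y1 (x + 1) - y2 (x + 1)) - (y1 x - y2 x)) by (rewrite E1; ring).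
    eapply Rle_trans; [apply Rabs_triang|]. rewrite Rabs_Ropp.
    pose proof (Heps (x + 1) ltac:(lra)). pose proof (Heps x ltac:(lra)). lra. }
  assert (B2 : Rabs (f eta (y1 eta) - f eta (y2 eta)) <= Lam * eps).
  { eapply Rle_trans; [apply HfL; [apply Hb1| apply Hb2]; lra|].
    apply Rmult_le_compat_l; [exact HLam| apply Heps; lra]. }
  replace (z1 x - z2 x) with ((z1 xi - z2 xi) - (f eta (y1 eta) - f eta (y2 eta)) * (xi - x))
    by (rewrite <- E2; ring).
  eapply Rle_trans; [apply Rabs_triang|]. rewrite Rabs_Ropp, Rabs_mult, (Rabs_right (xi - x)) by lra.
  pose proof (Rabs_pos (f eta (y1 eta) - f eta (y2 eta))). nra.
Qed.

Lemma is_derive_shift (g : R -> R) c t l : is_derive g (t + c) l -> is_derive (fun t => g (t + c)) t l.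
Proof.
  intros H. rewrite <- (Rmult_1_l l).
  apply (is_derive_comp g (fun t => t + c) t l 1 H).
  rewrite <- (Rplus_0_r 1). apply (is_derive_plus (V := R_NormedModule));
    [apply (is_derive_id (K := R_AbsRing))| exact (is_derive_const c t)].
Qed.

Lemma solution_from_mono (f : R -> R -> R) A A' (y z : R -> R) :
  A' <= A -> solution_from f A' y z -> solution_from f A y z.
Proof. intros HA H t Ht. apply H. lra. Qed.

Section Periodic.

Variables (f : R -> R -> R) (L x0 a b Lam m : R).
Hypothesis HL : 0 < L.
Hypothesis Hfc : forall p : R * R, continuous (fun q : R * R => f (fst q) (snd q)) p.
Hypothesis Hfper : forall x y, f (x + L) y = f x y.
Hypothesis HfL : forall t u v, a <= u <= b -> a <= v <= b -> Rabs (f t u - f t v) <= Lam * Rabs (u - v).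
Hypothesis HLam : 0 <= Lam.
Hypothesis Hm : 0 < m.
Hypothesis Hmono : forall t u v, a <= u <= b -> a <= v <= b -> m * (u - v)^2 <= (f t u - f t v) * (u - v).
Variables (phi phi1 : R -> R).
Hypothesis Hsol : solution_from f x0 phi phi1.
Hypothesis Hin : forall x, x0 <= x -> a <= phi x <= b.

Definition translate (n : nat) (t : R) : R := phi (t + INR n * L).
Definition translate1 (n : nat) (t : R) : R := phi1 (t + INR n * L).

Lemma translate_solution n : solution_from f (x0 - INR n * L) (translate n) (translate1 n).
Proof.
  intros t Ht. split.
  - apply is_derive_shift, Hsol. lra.
  - unfold translate. rewrite <- (periodic_nat f L Hfper n t).
    apply (is_derive_shift phi1 (INR n * L)), Hsol. lra.
Qed.

Lemma translate_range n t : x0 - INR n * L <= t -> a <= translate n t <= b.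
Proof. intros Ht. apply Hin. lra. Qed.

Let k := Rmin 1 m.
Let r n := (2 + Lam) * ((b - a) * exp (- (k * L / 2) * INR n)).

Lemma translate_rate_lim : is_lim_seq r 0.
Proof.
  unfold r. replace (Finite 0) with (Rbar_mult ((2 + Lam) * (b - a)) 0) by (simpl; f_equal; ring).
  apply (is_lim_seq_ext (fun n => (2 + Lam) * (b - a) * exp (- (k * L / 2) * INR n))); [intros; ring|].
  apply is_lim_seq_scal_l, is_lim_seq_exp_neg.
  assert (0 < k) by (unfold k; apply Rmin_pos; lra). nra.
Qed.

Lemma translate_Cauchy N0 y n j : x0 - INR N0 * L <= y ->
  Rabs (translate (n + j + N0) y - translate (n + N0) y) <= r n /\
  Rabs (translate1 (n + j + N0) y - translate1 (n + N0) y) <= r n.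
Proof.
  intros Hy.
  set (A := x0 - INR (n + N0) * L).
  assert (Hnj : x0 - INR (n + j + N0) * L <= A)
    by (unfold A; rewrite !plus_INR; pose proof (pos_INR j); nra).
  assert (HyA : INR n * L <= y - A) by (unfold A; rewrite plus_INR; lra).
  assert (HnL : 0 <= INR n * L) by (apply Rmult_le_pos; [apply pos_INR| lra]).
  assert (Hba : 0 <= b - a) by (pose proof (Hin x0 (Rle_refl _)); lra).
  assert (Hdec : forall t, y <= t ->
            Rabs (translate (n + j + N0) t - translate (n + N0) t) <= (b - a) * exp (- (k * L / 2) * INR n)).
  { intros t Ht. eapply Rle_trans.
    - apply (solutions_contract f a b m Hm Hmono _ (translate1 (n + j + N0)) _ (translate1 (n + N0)) A).
      + apply (solution_from_mono _ _ _ _ _ Hnj), translate_solution.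
      + apply translate_solution.
      + intros; apply translate_range; lra.
      + intros; apply translate_range. unfold A in *. lra.
      + lra.
    - apply Rmult_le_compat_l; [exact Hba|]. apply exp_le_mono. fold k.
      assert (0 < k) by (unfold k; apply Rmin_pos; lra).
      assert (k * (INR n * L) <= k * (t - A)) by (apply Rmult_le_compat_l; lra). lra. }
  assert (Hexp : 0 <= (b - a) * exp (- (k * L / 2) * INR n)) by (apply Rmult_le_pos; [lra| left; apply exp_pos]).
  split.
  - eapply Rle_trans; [apply Hdec, Rle_refl|]. unfold r. nra.
  - apply (solution_derive_diff_le f a b Lam (translate (n + j + N0)) _ (translate (n + N0)) _ A); auto.
    + apply (solution_from_mono _ _ _ _ _ Hnj), translate_solution.
    + apply translate_solution.
    + intros; apply translate_range; lra.
    + intros; apply translate_range. unfold A in *. lra.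
    + lra.
    + intros t Ht. apply Hdec. lra.
Qed.

Definition psi (y : R) : R := Lim_seq (fun n => translate n y).
Definition psi1 (y : R) : R := Lim_seq (fun n => translate1 n y).

Lemma psi_rate N0 y : x0 - INR N0 * L <= y -> forall n,
  Rabs (translate (n + N0) y - psi y) <= r n /\ Rabs (translate1 (n + N0) y - psi1 y) <= r n.
Proof.
  intros Hy n. unfold psi, psi1.
  rewrite <- (Lim_seq_incr_n (fun n => translate n y) N0), <- (Lim_seq_incr_n (fun n => translate1 n y) N0).
  split; apply (Cauchy_rate_Lim_seq (fun n => _ (n + N0)%nat y) r translate_rate_lim);
    intros n' j; apply translate_Cauchy, Hy.
Qed.

Lemma translate_start_before y : exists N0 : nat, x0 - INR N0 * L <= y.
Proof.
  destruct (INR_unbounded ((x0 - y) / L)) as [N HN]. exists N.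
  apply Rmult_gt_compat_r with (r := L) in HN; [|exact HL].
  unfold Rdiv in HN. rewrite Rmult_assoc, Rinv_l, Rmult_1_r in HN by lra. lra.
Qed.

Lemma psi_range y : a <= psi y <= b.
Proof.
  destruct (translate_start_before y) as [N0 HN].
  assert (Hn : forall n, a <= translate (n + N0) y <= b /\ Rabs (translate (n + N0) y - psi y) <= r n).
  { intros n. split; [apply translate_range| apply psi_rate, HN].
    rewrite plus_INR. pose proof (pos_INR n). nra. }
  split.
  - enough (- psi y <= - a) by lra. apply (le_of_le_plus_null_seq _ _ r translate_rate_lim).
    intros n. destruct (Hn n) as [H1 H2]. apply Rabs_le_between in H2. lra.
  - apply (le_of_le_plus_null_seq _ _ r translate_rate_lim).
    intros n. destruct (Hn n) as [H1 H2]. apply Rabs_le_between in H2. lra.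
Qed.

Lemma psi_local_rates x : exists N0 : nat, forall n y, x - 1 < y < x + 1 ->
  x0 - INR (n + N0) * L <= y /\
  Rabs (translate (n + N0) y - psi y) <= r n /\ Rabs (translate1 (n + N0) y - psi1 y) <= r n.
Proof.
  destruct (translate_start_before (x - 1)) as [N0 HN]. exists N0. intros n y Hy.
  split; [rewrite plus_INR; pose proof (pos_INR n); nra| apply psi_rate; lra].
Qed.

Lemma psi_tail N0 y : psi y = Lim_seq (fun n => translate (n + N0) y) /\
  psi1 y = Lim_seq (fun n => translate1 (n + N0) y).
Proof.
  unfold psi, psi1. rewrite (Lim_seq_incr_n (fun n => translate n y)), (Lim_seq_incr_n (fun n => translate1 n y)).
  split; reflexivity.
Qed.

Lemma psi_is_derive x : is_derive psi x (psi1 x).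
Proof.
  destruct (psi_local_rates x) as [N0 HN].
  apply (is_derive_ext (fun y => real (Lim_seq (fun n => translate (n + N0) y)))).
  { intros y. symmetry. apply psi_tail. }
  rewrite (proj2 (psi_tail N0 x)).
  apply (is_derive_Lim_seq_of_rate (fun n => translate (n + N0)) (fun n => translate1 (n + N0)) r x
           translate_rate_lim).
  - intros n y Hy. apply translate_solution, HN, Hy.
  - intros n y Hy. apply (is_derive_continuous _ _ (f y (translate (n + N0) y))), translate_solution, HN, Hy.
  - intros n y Hy. rewrite <- (proj1 (psi_tail N0 y)). apply HN, Hy.
  - intros n y Hy. rewrite <- (proj2 (psi_tail N0 y)). apply HN, Hy.
Qed.

Lemma psi1_is_derive x : is_derive psi1 x (f x (psi x)).
Proof.
  destruct (psi_local_rates x) as [N0 HN].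
  assert (Hr0 : forall n, 0 <= r n).
  { intros n. destruct (HN n x ltac:(lra)) as [_ [H _]]. pose proof (Rabs_pos (translate (n + N0) x - psi x)). lra. }
  assert (HLr : forall n y, x - 1 < y < x + 1 ->
            Rabs (f y (translate (n + N0) y) - f y (psi y)) <= Lam * r n).
  { intros n y Hy. destruct (HN n y Hy) as (Hy' & Hr & _).
    eapply Rle_trans; [apply HfL; [apply translate_range, Hy'| apply psi_range]|].
    apply Rmult_le_compat_l; [exact HLam| exact Hr]. }
  assert (Hf : forall y, x - 1 < y < x + 1 -> Lim_seq (fun n => f y (translate (n + N0) y)) = f y (psi y)).
  { intros y Hy. apply is_lim_seq_unique, (is_lim_seq_of_rate _ (fun n => Lam * r n)).
    - replace (Finite 0) with (Rbar_mult Lam 0) by (simpl; f_equal; ring).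
      apply is_lim_seq_scal_l, translate_rate_lim.
    - intros n. apply HLr, Hy. }
  apply (is_derive_ext (fun y => real (Lim_seq (fun n => translate1 (n + N0) y)))).
  { intros y. symmetry. apply psi_tail. }
  replace (f x (psi x)) with (real (Lim_seq (fun n => f x (translate (n + N0) x))))
    by (rewrite Hf by lra; reflexivity).
  apply (is_derive_Lim_seq_of_rate (fun n => translate1 (n + N0)) (fun n y => f y (translate (n + N0) y))
           (fun n => (1 + Lam) * r n) x).
  - replace (Finite 0) with (Rbar_mult (1 + Lam) 0) by (simpl; f_equal; ring).
    apply is_lim_seq_scal_l, translate_rate_lim.
  - intros n y Hy. apply translate_solution, HN, Hy.
  - intros n y Hy. apply continuous_fun2_comp; [exact Hfc|].
    apply (is_derive_continuous _ _ (translate1 (n + N0) y)), translate_solution, HN, Hy.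
  - intros n y Hy. rewrite <- (proj2 (psi_tail N0 y)). specialize (Hr0 n).
    destruct (HN n y Hy) as (_ & _ & H). nra.
  - intros n y Hy. rewrite Hf by exact Hy. simpl. specialize (Hr0 n). pose proof (HLr n y Hy). nra.
Qed.

Lemma psi_solution : solution f psi psi1.
Proof. intros x. split; [apply psi_is_derive| apply psi1_is_derive]. Qed.

Lemma psi_periodic : periodic L psi.
Proof.
  intros x. unfold psi. f_equal. rewrite <- (Lim_seq_incr_1 (fun n => translate n x)).
  apply Lim_seq_ext. intros n. unfold translate. rewrite S_INR. f_equal. ring.
Qed.

Lemma psi_attracts A chi chi1 : solution_from f A chi chi1 -> (forall t, A <= t -> a <= chi t <= b) ->
  forall x, A <= x -> Rabs (chi x - psi x) <= (b - a) * exp (- k * (x - A) / 2).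
Proof.
  intros Hchi Hchin x Hx.
  apply (solutions_contract f a b m Hm Hmono chi chi1 psi psi1 A); auto.
  - intros t _. apply psi_solution.
  - intros t _. apply psi_range.
Qed.

Lemma psi_unique chi chi1 : solution f chi chi1 -> (forall x, a <= chi x <= b) -> forall x, chi x = psi x.
Proof.
  intros Hchi Hchin x. apply Rminus_diag_uniq.
  apply (eq0_of_abs_le_null_seq _ (fun n => (b - a) * exp (- (k / 2) * INR n))).
  - replace (Finite 0) with (Rbar_mult (b - a) 0) by (simpl; f_equal; ring).
    apply is_lim_seq_scal_l, is_lim_seq_exp_neg.
    assert (0 < k) by (unfold k; apply Rmin_pos; lra). lra.
  - intros n. eapply Rle_trans.
    + apply (psi_attracts (x - INR n) chi chi1); [intros t _; apply Hchi| intros; apply Hchin|].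
      pose proof (pos_INR n). lra.
    + right. f_equal. f_equal. field.
Qed.

Lemma phi_converges_to_psi :
  is_lim (fun x => Rabs (phi x - psi x) + Rabs (phi1 x - psi1 x)) p_infty 0.
Proof.
  set (B := fun x => (b - a) * exp (- k * (x - x0) / 2)).
  assert (Hk : 0 < k) by (unfold k; apply Rmin_pos; lra).
  assert (Hba : 0 <= b - a) by (pose proof (Hin x0 (Rle_refl _)); lra).
  assert (Hpsi : solution_from f x0 psi psi1) by (intros t _; apply psi_solution).
  assert (Hb0 : forall x, x0 <= x -> Rabs (phi x - psi x) <= B x)
    by (intros x Hx; apply (psi_attracts x0 phi phi1); auto).
  assert (Hb1 : forall x, x0 <= x -> Rabs (phi1 x - psi1 x) <= (2 + Lam) * B x).
  { intros x Hx. apply (solution_derive_diff_le f a b Lam phi phi1 psi psi1 x0); auto.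
    - intros; apply psi_range.
    - intros t Ht. eapply Rle_trans; [apply Hb0; lra|]. unfold B.
      apply Rmult_le_compat_l; [exact Hba|]. apply exp_le_mono.
      assert (k * (x - x0) <= k * (t - x0)) by (apply Rmult_le_compat_l; lra). lra. }
  apply (is_lim_le_le_loc (fun _ => 0) (fun x => (3 + Lam) * (b - a) * exp (- (k / 2) * (x - x0)))).
  - exists x0. intros x Hx. specialize (Hb0 x ltac:(lra)). specialize (Hb1 x ltac:(lra)).
    pose proof (Rabs_pos (phi x - psi x)). pose proof (Rabs_pos (phi1 x - psi1 x)).
    replace (- (k / 2) * (x - x0)) with (- k * (x - x0) / 2) by field. unfold B in *. nra.
  - apply is_lim_const.
  - apply is_lim_exp_decay. lra.
Qed.

Lemma periodic_attractor : exists psi psi1 : R -> R,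
  periodic L psi /\ solution f psi psi1 /\
  is_lim (fun x => Rabs (phi x - psi x) + Rabs (phi1 x - psi1 x)) p_infty 0 /\
  (forall x, a <= psi x <= b) /\
  (forall chi chi1 : R -> R, periodic L chi -> solution f chi chi1 ->
     (forall x, a <= chi x <= b) -> forall x, chi x = psi x).
Proof.
  exists psi, psi1.
  split; [exact psi_periodic|]. split; [exact psi_solution|].
  split; [exact phi_converges_to_psi|]. split; [exact psi_range|].
  (* Uniqueness holds among all entire solutions with values in [a, b], periodic or not. *)
  intros chi chi1 _. apply psi_unique.
Qed.

End Periodic.

Theorem theorem2 (L : R) (f : R -> R -> R) (x0 : R)
  (alpha beta alpha1 alpha2 beta1 beta2 : R -> R)
  (HL : 0 < L)
  (Hfc : forall p : R * R, continuous (fun q : R * R => f (fst q) (snd q)) p)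
  (Hfper : forall x y, f (x + L) y = f x y)
  (Hfd : forall x y, ex_derive (f x) y)
  (Hfdc : forall p : R * R,
      continuous (fun q : R * R => Derive (f (fst q)) (snd q)) p)
  (Hab : bounded_from x0 alpha) (Hbb : bounded_from x0 beta)
  (Had : twice_diff_from x0 alpha alpha1 alpha2)
  (Hbd : twice_diff_from x0 beta beta1 beta2)
  (H1 : forall x, x0 < x -> alpha x < beta x)
  (H2a : forall x, x0 < x -> alpha2 x > f x (alpha x))
  (H2b : forall x, x0 < x -> beta2 x < f x (beta x)) :
  exists phi phi1 : R -> R,
    solution_from f x0 phi phi1 /\
    (forall x, x0 < x -> alpha x < phi x < beta x) /\
    ((exists m, 0 < m /\
        (exists x y, 0 <= x <= L /\
           inf_from x0 alpha <= y <= sup_from x0 beta /\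
           Derive (f x) y = m) /\
        (forall x y, 0 <= x <= L ->
           inf_from x0 alpha <= y <= sup_from x0 beta ->
           m <= Derive (f x) y)) ->
     exists psi psi1 : R -> R,
       periodic L psi /\ solution f psi psi1 /\
       is_lim (fun x => Rabs (phi x - psi x) + Rabs (phi1 x - psi1 x))
              p_infty 0 /\
       (forall x, inf_from x0 alpha <= psi x <= sup_from x0 beta) /\
       (forall chi chi1 : R -> R,
          periodic L chi -> solution f chi chi1 ->
          (forall x, inf_from x0 alpha <= chi x <= sup_from x0 beta) ->
          forall x, chi x = psi x)).
Proof.
  set (a := inf_from x0 alpha). set (b := sup_from x0 beta).
  pose proof (inf_from_le x0 alpha Hab) as Ha. pose proof (le_sup_from x0 beta Hbb) as Hb.
  assert (Hfd_per : forall x y, Derive (f (x + L)) y = Derive (f x) y)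
    by (intros x y; apply Derive_ext; intros; apply Hfper).
  destruct (periodic_bounded_on_strip f L a b HL Hfc Hfper) as [K [_ HK]].
  destruct (periodic_bounded_on_strip (fun x y => Derive (f x) y) L a b HL Hfdc Hfd_per) as [Lam [HLam HD]].
  pose proof (fun x => Lipschitz_of_Derive_bound (f x) a b Lam (Hfd x) (HD x)) as HfL.
  destruct (shooting_solution f x0 alpha beta alpha1 alpha2 beta1 beta2 a b K Lam Hfc HK HfL HLam
              Had Hbd H1 H2a H2b Ha Hb) as [phi [phi1 [Hsol [Hstrict Hin]]]].
  exists phi, phi1. split; [exact Hsol|]. split; [exact Hstrict|].
  intros [m [Hm [_ Hmin]]].
  assert (Hmono : forall t u v, a <= u <= b -> a <= v <= b -> m * (u - v)^2 <= (f t u - f t v) * (u - v)).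
  { intros t. destruct (periodic_reduce f L HL Hfper t) as [t' [Ht' Hf]].
    intros u v Hu Hv. rewrite !Hf.
    apply (strongly_monotone_of_Derive_ge (f t') a b m (Hfd t')); auto. }
  exact (periodic_attractor f L x0 a b Lam m HL Hfc Hfper HfL HLam Hm Hmono phi phi1 Hsol Hin).
Qed.
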